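(* Let $C_0\ge1$. There is a constant $M$ depending only on $C_0$ such that the following holds. Let $k,k'$ be positive integers and $w>0$ with $$0<k'-k\le C_0w^{-1},\qquad w^{-1}\le C_0k .$$ Let $f=\cos(kx)e^{-kt}$, $g=\cos(k'y)e^{-k't}$ (both harmonic in $\mathbb{T}^2\times\mathbb{R}$), put $\alpha(t)=\theta(t/w)$ and $$u=\begin{cases}f+(1-\alpha(t))g,& t\le w,\\ \alpha(t-w)f+g,& t\ge w.\end{cases}$$ Then: (a) there is a $C^1$ real $2\times2$ matrix-valued function $A(x,y,t)$ on $\mathbb{T}^2\times\mathbb{R}$, equal to the identity for $t\le0$ and $t\ge 2w$, such that $\ddot u+\operatorname{div}(A\nabla u)=0$ on $\mathbb{T}^2\times\mathbb{R}$; (b) on $\mathbb{T}^2\times\mathbb{R}$, $\|A-\mathrm{Id}\|\le \frac{M}{wk}$, $\|\nabla A\|\le\frac{M}{w}$ and $\|\dot A\|\le\frac Mw$; (c) for every multi-index $\beta\in\mathbb{N}^3$ (derivatives in $x,y,t$) with $|\beta|\le2$ and every $(x,y,t)\in\mathbb{T}^2\times[0,2w]$, $$|\partial^\beta u(x,y,t)|\le M(k')^{|\beta|}\sup_{\mathbb{T}^2\times[0,2w]}|u|.$$ In particular $u=f$ for $t\le0$ and $u=g$ for $t\ge2w$.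
   Context: $\mathbb{T}^2=(\mathbb{R}/2\pi\mathbb{Z})^2$ with coordinates $(x,y)$, $t$ the third coordinate. For a real $2\times2$ matrix function $A(x,y,t)$, $\ddot u+\operatorname{div}(A\nabla u)$ means $\partial_t^2u+\sum_{i,j\in\{x,y\}}\partial_i(A_{ij}\partial_ju)$; $\nabla A$ denotes the spatial $(x,y)$-derivatives of the entries of $A$ and $\dot A=\partial_tA$. The function $\theta:\mathbb{R}\to[0,1]$ is defined by $\theta(t)=1$ for $t\le0$, $\theta(t)=0$ for $t\ge1$, and $\theta(t)=1-G(\tan(\pi(t-1/2)))$ for $t\in(0,1)$, where $G(s)=\pi^{-1/2}\int_{-\infty}^se^{-\eta^2}\,d\eta$; it is $C^\infty$, monotonically decreasing on $(0,1)$. *)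

From Stdlib Require Import Reals Lra List.
From Coquelicot Require Import Coquelicot.
Open Scope R_scope.

Definition G (s : R) : R :=
  / sqrt PI * RInt_gen (fun eta => exp (- eta ^ 2)) (Rbar_locally m_infty) (at_point s).

Definition theta (t : R) : R :=
  if Rle_dec t 0 then 1
  else if Rle_dec 1 t then 0
  else 1 - G (tan (PI * (t - / 2))).

(* functions on T^2 x R, represented as functions of (x,y,t) in R^3 *)
Definition fn3 := R -> R -> R -> R.

Inductive dir := Dx | Dy | Dt.
Inductive sdir := Sx | Sy.
Definition sdir_to_dir (i : sdir) : dir := match i with Sx => Dx | Sy => Dy end.
Coercion sdir_to_dir : sdir >-> dir.

Definition pd (d : dir) (F : fn3) : fn3 :=
  match d with
  | Dx => fun x y t => Derive (fun s => F s y t) x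
  | Dy => fun x y t => Derive (fun s => F x s t) y
  | Dt => fun x y t => Derive (fun s => F x y s) t
  end.

Definition ex_pd (d : dir) (F : fn3) (x y t : R) : Prop :=
  match d with
  | Dx => ex_derive (fun s => F s y t) x
  | Dy => ex_derive (fun s => F x s t) y
  | Dt => ex_derive (fun s => F x y s) t
  end.

Fixpoint pdl (beta : list dir) (F : fn3) : fn3 :=
  match beta with
  | nil => F
  | d :: b => pd d (pdl b F)
  end.

Definition cont3 (F : fn3) : Prop :=
  forall x y t eps, 0 < eps -> exists delta, 0 < delta /\
    forall x' y' t', Rabs (x' - x) < delta -> Rabs (y' - y) < delta -> Rabs (t' - t) < delta ->
      Rabs (F x' y' t' - F x y t) < eps.

Definition is_C1 (F : fn3) : Prop :=
  cont3 F /\ forall d, (forall x y t, ex_pd d F x y t) /\ cont3 (pd d F).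

(* 2pi-periodic in x and y, i.e. a function on T^2 x R *)
Definition periodic2 (F : fn3) : Prop :=
  forall x y t, F (x + 2 * PI) y t = F x y t /\ F x (y + 2 * PI) t = F x y t.

Definition delta (i j : sdir) : R :=
  match i, j with Sx, Sx | Sy, Sy => 1 | _, _ => 0 end.

Definition wave_op (A : sdir -> sdir -> fn3) (u : fn3) : fn3 :=
  fun x y t =>
    pd Dt (pd Dt u) x y t
    + pd Dx (fun x y t => A Sx Sx x y t * pd Dx u x y t + A Sx Sy x y t * pd Dy u x y t) x y t
    + pd Dy (fun x y t => A Sy Sx x y t * pd Dx u x y t + A Sy Sy x y t * pd Dy u x y t) x y t.

Definition f_fun (k : nat) : fn3 := fun x y t => cos (INR k * x) * exp (- INR k * t).
Definition g_fun (k' : nat) : fn3 := fun x y t => cos (INR k' * y) * exp (- INR k' * t).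

Definition u_fun (k k' : nat) (w : R) : fn3 := fun x y t =>
  if Rle_dec t w then f_fun k x y t + (1 - theta (t / w)) * g_fun k' x y t
  else theta ((t - w) / w) * f_fun k x y t + g_fun k' x y t.

(* With [alpha = theta ((t - w) / w)] and [beta = 1 - theta (t / w)] ([fprof w 0] and [gprof w 0]
   below), [u = alpha f + beta g] combines the harmonic modes [f] and [g], so
   [u_tt + Delta u = (alpha'' - 2 k alpha') f + (beta'' - 2 k' beta') g].  Because [beta'] lives on
   [[0, w]], where [alpha = 1], and [alpha'] on [[w, 2w]], where [beta = 1], both error terms are
   divergences [div ((A - Id) grad u)] for a matrix whose entries are [cos]/[sin] of [k x], [k' y]
   times [(beta'' - 2 k' beta') e^{(k - k') t} / k^2] or [(alpha'' - 2 k alpha') e^{(k' - k) t} / k'^2].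
   As [|theta^(j)| <= K_theta] and [(k' - k) w <= C0], these are [O(1 / (w k))], with one more factor
   [k'] or [1 / w] per derivative.
   The smoothness of [theta] comes from [theta = 1/2 - P (tan (PI (t - 1/2))) / sqrt PI] with
   [P x = \int_0^x e^{-s^2}]: its derivatives are [e^{-z^2} q(z)] for polynomials [q] and
   [z = tan (PI (t - 1/2))], and they vanish to second order at [0] and [1] because
   [1 + z^2 = 1 / sin^2 (PI t)].
   For (c), every derivative of [u] is again a two-mode function whose profiles grow by a factor
   [2 C0 k'] per derivative, while [sup |u| >= u (0, 0, 0) = 1]. *)

From Pilot Require Import Defs.
From Stdlib Require Import Reals Lra Lia List FunctionalExtensionality.
From Coquelicot Require Import Coquelicot.
Open Scope R_scope.

Lemma pow_le_fact_mul_exp n s : 0 <= s -> s ^ n <= INR (Factorial.fact n) * exp s.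
Proof.
  intros Hs. pose proof (INR_fact_lt_0 n).
  apply Rmult_le_reg_r with (/ INR (Factorial.fact n)); [apply Rinv_0_lt_compat; lra|].
  rewrite (Rmult_comm (INR _)), Rmult_assoc, Rinv_r, Rmult_1_r by lra.
  eapply Rle_trans; [|apply (exp_ge_taylor s n Hs)].
  assert (Hpos : forall k, 0 <= s ^ k / INR (Factorial.fact k)).
  { intros k. apply Rdiv_le_0_compat; [apply pow_le; lra | apply INR_fact_lt_0]. }
  destruct n as [|m]; [simpl; lra|].
  rewrite tech5. pose proof (cond_pos_sum _ m Hpos). lra.
Qed.

Lemma exp_le_mono x y : x <= y -> exp x <= exp y.
Proof. intros [H|H]; [left; apply exp_increasing, H | rewrite H; lra]. Qed.

Lemma Rabs_div_pos x y : 0 < y -> Rabs (x / y) = Rabs x / y.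
Proof. intros. unfold Rdiv. rewrite Rabs_mult, Rabs_inv, (Rabs_right y) by lra. reflexivity. Qed.

Lemma Rabs_mul3_le (a b c A B C : R) :
  Rabs a <= A -> Rabs b <= B -> Rabs c <= C -> Rabs (a * b * c) <= A * B * C.
Proof.
  intros. rewrite !Rabs_mult. pose proof (Rabs_pos a). pose proof (Rabs_pos b). pose proof (Rabs_pos c).
  apply Rmult_le_compat; [nra | lra | apply Rmult_le_compat |]; assumption.
Qed.

Lemma Rdiv_le_compat_r (a b c : R) : 0 < c -> a <= b -> a / c <= b / c.
Proof. intros. unfold Rdiv. apply Rmult_le_compat_r; [left; apply Rinv_0_lt_compat|]; assumption. Qed.

(* [continuous_ext] at type [R], so that the side condition is an equation [field] recognises. *)
Lemma continuous_ext_R (f g : R -> R) (x : R) :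
  (forall t : R, f t = g t) -> continuous f x -> continuous g x.
Proof. apply continuous_ext. Qed.

Lemma locally_open_interval (a b t : R) : a < t < b -> locally t (fun s => a < s < b).
Proof.
  intros Ht. assert (Hd : 0 < Rmin (t - a) (b - t)) by (apply Rmin_glb_lt; lra).
  exists (mkposreal _ Hd). intros s Hs. change (Rabs (s - t) < Rmin (t - a) (b - t)) in Hs.
  pose proof (Rmin_l (t - a) (b - t)). pose proof (Rmin_r (t - a) (b - t)).
  apply Rabs_def2 in Hs. lra.
Qed.

Lemma is_derive_loc_const (F : R -> R) (a b c t : R) :
  a < t < b -> (forall s, a < s < b -> F s = c) -> is_derive F t 0.
Proof.
  intros Ht HF. apply is_derive_ext_loc with (f := fun _ => c).
  - generalize (locally_open_interval a b t Ht). apply filter_imp. intros s Hs. rewrite HF; auto.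
  - apply (@is_derive_const R_AbsRing R_NormedModule).
Qed.

Lemma is_derive_zero_of_sqr_bound (F : R -> R) (a K d : R) : 0 < d -> 0 <= K ->
  (forall h, Rabs h < d -> Rabs (F (a + h) - F a) <= K * h ^ 2) -> is_derive F a 0.
Proof.
  intros Hd HK H. apply is_derive_Reals. intros eps Heps.
  assert (Hp : 0 < Rmin d (eps / (K + 1))) by (apply Rmin_glb_lt; [|apply Rdiv_lt_0_compat]; lra).
  exists (mkposreal _ Hp). intros h Hh0 Hh. simpl in Hh.
  assert (Hh1 : Rabs h < d) by (eapply Rlt_le_trans; [apply Hh | apply Rmin_l]).
  assert (Hh2 : Rabs h * (K + 1) < eps).
  { apply Rmult_lt_reg_r with (/ (K + 1)); [apply Rinv_0_lt_compat; lra|].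
    rewrite Rmult_assoc, Rinv_r, Rmult_1_r by lra.
    eapply Rlt_le_trans; [apply Hh | apply Rmin_r]. }
  assert (Ha : 0 < Rabs h) by (apply Rabs_pos_lt; auto).
  rewrite Rminus_0_r. unfold Rdiv. rewrite Rabs_mult, Rabs_inv.
  apply Rmult_lt_reg_r with (Rabs h); [exact Ha|]. rewrite Rmult_assoc, Rinv_l, Rmult_1_r by lra.
  apply Rle_lt_trans with (K * h ^ 2); [auto|].
  replace (h ^ 2) with (Rabs h * Rabs h) by (rewrite <- Rabs_mult, Rabs_right by nra; ring).
  nra.
Qed.

Lemma sqrt_PI_pos : 0 < sqrt PI.
Proof. apply sqrt_lt_R0, PI_RGT_0. Qed.

(** * The Gaussian integral *)

Definition gauss (x : R) : R := exp (- x ^ 2).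

Definition gauss_prim (x : R) : R := RInt gauss 0 x.

Lemma continuous_gauss x : continuous gauss x.
Proof. apply (@ex_derive_continuous R_AbsRing R_NormedModule). unfold gauss. auto_derive. easy. Qed.

Lemma ex_RInt_gauss a b : ex_RInt gauss a b.
Proof. apply (@ex_RInt_continuous R_CompleteNormedModule). intros; apply continuous_gauss. Qed.

Lemma is_derive_gauss_prim x : is_derive gauss_prim x (gauss x).
Proof.
  apply is_derive_RInt with (a := 0); [|apply continuous_gauss].
  apply filter_forall; intros b. apply (@RInt_correct R_CompleteNormedModule), ex_RInt_gauss.
Qed.

Lemma Derive_gauss_prim x : Derive gauss_prim x = gauss x.
Proof. apply is_derive_unique, is_derive_gauss_prim. Qed.

Lemma gauss_prim_opp x : gauss_prim (- x) = - gauss_prim x.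
Proof.
  unfold gauss_prim.
  pose proof (@RInt_comp_lin R_CompleteNormedModule gauss (-1) 0 0 x (ex_RInt_gauss _ _)) as H.
  replace (-1 * 0 + 0) with 0 in H by ring. replace (-1 * x + 0) with (- x) in H by ring.
  rewrite <- H, (RInt_ext _ (fun y => opp (gauss y))).
  - rewrite (@RInt_opp R_CompleteNormedModule); [reflexivity | apply ex_RInt_gauss].
  - intros y _. unfold scal; simpl; unfold mult, opp; simpl. unfold gauss.
    replace ((-1 * y + 0) ^ 2) with (y ^ 2) by ring. ring.
Qed.

(* [gauss_prim x ^ 2 + gauss_aux x] has derivative zero, hence equals its value
   [\int_0^1 dt / (1 + t^2) = PI / 4] at [0]; this evaluates the Gaussian integral. *)
Definition gauss_aux_integrand (x t : R) : R := exp (- x ^ 2 * (1 + t ^ 2)) / (1 + t ^ 2).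

Definition gauss_aux (x : R) : R := RInt (gauss_aux_integrand x) 0 1.

Lemma Derive_gauss_aux_integrand x t :
  Derive (fun y => gauss_aux_integrand y t) x = -2 * x * exp (- x ^ 2 * (1 + t ^ 2)).
Proof.
  apply is_derive_unique. unfold gauss_aux_integrand. auto_derive; [nra|].
  replace (x * (x * 1)) with (x ^ 2) by ring. replace (t * (t * 1)) with (t ^ 2) by ring.
  field. nra.
Qed.

Lemma ex_RInt_gauss_aux_integrand x a b : ex_RInt (gauss_aux_integrand x) a b.
Proof.
  apply (@ex_RInt_continuous R_CompleteNormedModule); intros.
  apply (@ex_derive_continuous R_AbsRing R_NormedModule).
  unfold gauss_aux_integrand. auto_derive. nra.
Qed.

Lemma continuity_2d_Derive_gauss_aux_integrand x t :
  continuity_2d_pt (fun y s => Derive (fun z => gauss_aux_integrand z s) y) x t.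
Proof.
  apply continuity_2d_pt_ext with (f := fun y s => (-2 * y) * exp (- (y ^ 2) * (1 + s ^ 2))).
  { intros; rewrite Derive_gauss_aux_integrand; ring. }
  apply continuity_2d_pt_mult.
  - apply continuity_2d_pt_mult; [apply continuity_2d_pt_const | apply continuity_2d_pt_id1].
  - apply continuity_1d_2d_pt_comp; [apply derivable_continuous_pt, derivable_pt_exp|].
    apply continuity_2d_pt_mult.
    + apply continuity_2d_pt_opp; simpl.
      repeat apply continuity_2d_pt_mult; auto using continuity_2d_pt_id1, continuity_2d_pt_const.
    + apply continuity_2d_pt_plus; [apply continuity_2d_pt_const|]; simpl.
      repeat apply continuity_2d_pt_mult; auto using continuity_2d_pt_id2, continuity_2d_pt_const.
Qed.

(* The substitution [s = x t]. *)
Lemma RInt_Derive_gauss_aux_integrand x :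
  RInt (fun t => Derive (fun y => gauss_aux_integrand y t) x) 0 1 = -2 * gauss x * gauss_prim x.
Proof.
  rewrite (RInt_ext _ (fun t => scal (-2 * gauss x) (scal x (gauss (x * t + 0))))).
  - rewrite (@RInt_scal R_CompleteNormedModule).
    2:{ apply (@ex_RInt_continuous R_CompleteNormedModule); intros.
        apply (@ex_derive_continuous R_AbsRing R_NormedModule).
        unfold scal; simpl; unfold mult; simpl. unfold gauss. auto_derive. easy. }
    rewrite (@RInt_comp_lin R_CompleteNormedModule); [|apply ex_RInt_gauss].
    unfold gauss_prim, scal; simpl; unfold mult; simpl.
    rewrite Rmult_0_r, Rplus_0_r, Rmult_1_r, Rplus_0_r. reflexivity.
  - intros t _. rewrite Derive_gauss_aux_integrand.
    unfold gauss, scal; simpl; unfold mult; simpl.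
    transitivity (-2 * x * (exp (- (x * (x * 1))) * exp (- ((x * t + 0) * ((x * t + 0) * 1))))).
    + rewrite <- exp_plus. f_equal. f_equal. ring.
    + ring.
Qed.

Lemma is_derive_gauss_aux x : is_derive gauss_aux x (-2 * gauss x * gauss_prim x).
Proof.
  rewrite <- RInt_Derive_gauss_aux_integrand. apply is_derive_RInt_param.
  - apply filter_forall; intros y t _. unfold gauss_aux_integrand. auto_derive. nra.
  - intros t _. apply continuity_2d_Derive_gauss_aux_integrand.
  - apply filter_forall; intros y. apply ex_RInt_gauss_aux_integrand.
Qed.

Lemma gauss_aux_0 : gauss_aux 0 = PI / 4.
Proof.
  unfold gauss_aux. rewrite (RInt_ext _ (fun t => / (1 + t ^ 2))).
  - rewrite <- atan_1. replace (atan 1) with (atan 1 - atan 0) by (rewrite atan_0; ring).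
    apply is_RInt_unique, (@is_RInt_derive R_CompleteNormedModule atan).
    + intros. apply is_derive_Reals, derivable_pt_lim_atan.
    + intros. apply (@ex_derive_continuous R_AbsRing R_NormedModule). auto_derive. nra.
  - intros t _. unfold gauss_aux_integrand.
    replace (- 0 ^ 2 * (1 + t ^ 2)) with 0 by ring. rewrite exp_0. apply Rmult_1_l.
Qed.

Lemma gauss_prim_sqr_add_aux x : gauss_prim x ^ 2 + gauss_aux x = PI / 4.
Proof.
  set (F := fun x => gauss_prim x ^ 2 + gauss_aux x).
  assert (dF : forall y, is_derive F y 0).
  { intros y. evar (l : R). replace 0 with l.
    - apply (@is_derive_plus R_AbsRing R_NormedModule).
      + apply (is_derive_pow gauss_prim 2 y _ (is_derive_gauss_prim y)).
      + apply is_derive_gauss_aux.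
    - unfold l, plus; simpl. change (INR 2) with 2. ring. }
  destruct (MVT_gen F 0 x (fun _ => 0)) as [c [_ Hc]].
  - intros; apply dF.
  - intros. apply continuity_pt_filterlim, (@ex_derive_continuous R_AbsRing R_NormedModule).
    exists 0. apply dF.
  - change (F x = PI / 4). replace (F x) with (F 0) by lra.
    unfold F, gauss_prim. rewrite RInt_point, gauss_aux_0. unfold zero; simpl. ring.
Qed.

Lemma gauss_aux_ge0 x : 0 <= gauss_aux x.
Proof.
  apply RInt_ge_0; [lra | apply ex_RInt_gauss_aux_integrand|].
  intros. apply Rdiv_le_0_compat; [apply Rlt_le, exp_pos | nra].
Qed.

Lemma gauss_aux_le x : gauss_aux x <= gauss x.
Proof.
  apply Rle_trans with (RInt (fun _ => gauss x) 0 1).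
  - apply RInt_le; [lra | apply ex_RInt_gauss_aux_integrand | apply ex_RInt_const|].
    intros t Ht. unfold gauss_aux_integrand, gauss.
    apply Rle_trans with (exp (- x ^ 2 * (1 + t ^ 2))).
    + unfold Rdiv. rewrite <- (Rmult_1_r (exp _)) at 2.
      apply Rmult_le_compat_l; [apply Rlt_le, exp_pos|].
      rewrite <- Rinv_1. apply Rinv_le_contravar; nra.
    + apply exp_le_mono. nra.
  - rewrite RInt_const. unfold scal; simpl; unfold mult; simpl. lra.
Qed.

Lemma Rabs_gauss_prim_le x : Rabs (gauss_prim x) <= sqrt PI / 2.
Proof.
  pose proof (gauss_prim_sqr_add_aux x). pose proof (gauss_aux_ge0 x).
  pose proof (sqrt_sqrt PI (Rlt_le _ _ PI_RGT_0)). pose proof sqrt_PI_pos.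
  rewrite <- (Rabs_right (sqrt PI / 2)) by lra. apply Rsqr_le_abs_0. unfold Rsqr. nra.
Qed.

Lemma gauss_prim_tail x : 0 <= x -> Rabs (gauss_prim x - sqrt PI / 2) <= 2 * gauss x / sqrt PI.
Proof.
  intros Hx. pose proof (gauss_prim_sqr_add_aux x). pose proof (gauss_aux_le x). pose proof (gauss_aux_ge0 x).
  pose proof (sqrt_sqrt PI (Rlt_le _ _ PI_RGT_0)). pose proof sqrt_PI_pos.
  assert (0 <= gauss_prim x).
  { apply RInt_ge_0; [lra | apply ex_RInt_gauss|]. intros. apply Rlt_le, exp_pos. }
  set (r := sqrt PI) in *. set (p := gauss_prim x) in *.
  assert (E : (r / 2 - p) * (r / 2 + p) = gauss_aux x) by nra.
  rewrite Rabs_left1 by (destruct (Rle_dec p (r / 2)); nra).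
  apply Rmult_le_reg_r with (r / 2 + p); [lra|].
  replace (2 * gauss x / r * (r / 2 + p)) with (gauss x + 2 * gauss x * p / r) by (field; lra).
  assert (0 <= 2 * gauss x * p / r).
  { apply Rmult_le_pos; [|left; apply Rinv_0_lt_compat; lra].
    pose proof (exp_pos (- x ^ 2)). unfold gauss. nra. }
  nra.
Qed.

Lemma gauss_le_inv x : gauss x <= / (1 + x ^ 2).
Proof.
  pose proof (exp_ineq1_le (x ^ 2)). unfold gauss. rewrite exp_Ropp. apply Rinv_le_contravar; nra.
Qed.

Lemma gauss_prim_lim_m_infty :
  filterlim gauss_prim (Rbar_locally m_infty) (locally (- (sqrt PI / 2))).
Proof.
  apply filterlim_locally. intros eps. pose proof (cond_pos eps) as He.
  pose proof sqrt_PI_pos as Hr. exists (- (2 / (sqrt PI * eps))). intros x Hx.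
  change (Rabs (gauss_prim x - - (sqrt PI / 2)) < eps).
  assert (Hb : 0 < 2 / (sqrt PI * eps)) by (apply Rdiv_lt_0_compat; nra).
  replace (gauss_prim x - - (sqrt PI / 2)) with (- (gauss_prim (- x) - sqrt PI / 2))
    by (rewrite gauss_prim_opp; ring).
  rewrite Rabs_Ropp. eapply Rle_lt_trans; [apply gauss_prim_tail; lra|].
  pose proof (gauss_le_inv (- x)) as Hg.
  assert (E : 2 / (sqrt PI * eps) * (sqrt PI * eps) = 2) by (field; lra).
  apply Rle_lt_trans with (2 * / (1 + (- x) ^ 2) / sqrt PI).
  { unfold Rdiv. apply Rmult_le_compat_r; [left; apply Rinv_0_lt_compat; lra | lra]. }
  apply Rmult_lt_reg_r with (sqrt PI * (1 + (- x) ^ 2)); [nra|].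
  replace (2 * / (1 + (- x) ^ 2) / sqrt PI * (sqrt PI * (1 + (- x) ^ 2))) with 2 by (field; nra).
  assert (- x < 1 + (- x) ^ 2) by nra.
  assert (2 / (sqrt PI * eps) < 1 + (- x) ^ 2) by (simpl in Hx; lra).
  assert (0 < sqrt PI * eps) by nra. nra.
Qed.

Lemma G_gauss_prim s : G s = / sqrt PI * (gauss_prim s + sqrt PI / 2).
Proof.
  unfold G. f_equal. replace (gauss_prim s + sqrt PI / 2) with (gauss_prim s - - (sqrt PI / 2)) by ring.
  apply is_RInt_gen_unique, (is_RInt_gen_ext (Derive gauss_prim)).
  - apply filter_forall; intros ab x _. rewrite Derive_gauss_prim. reflexivity.
  - apply is_RInt_gen_Derive.
    + apply filter_forall; intros ab x _. exists (gauss x). apply is_derive_gauss_prim.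
    + apply filter_forall; intros ab x _.
      apply (continuous_ext gauss); [intros; rewrite Derive_gauss_prim; reflexivity|].
      apply continuous_gauss.
    + apply gauss_prim_lim_m_infty.
    + intros P HP. exact (locally_singleton _ _ HP).
Qed.

(** * The cutoff [theta] and its derivatives *)

Definition theta_tan (t : R) : R := tan (PI * (t - / 2)).

Lemma sin_PI_mul_pos t : 0 < t < 1 -> 0 < sin (PI * t).
Proof. intros. apply sin_gt_0; pose proof PI_RGT_0; nra. Qed.

Lemma cos_theta_tan_arg t : cos (PI * (t - / 2)) = sin (PI * t).
Proof.
  replace (PI * (t - / 2)) with (PI * t - PI / 2) by field.
  rewrite cos_minus, cos_PI2, sin_PI2. ring.
Qed.

Lemma is_derive_theta_tan t : 0 < t < 1 -> is_derive theta_tan t (PI * (1 + theta_tan t ^ 2)).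
Proof.
  intros Ht. pose proof (sin_PI_mul_pos t Ht). pose proof (cos_theta_tan_arg t).
  unfold theta_tan, tan. auto_derive; replace (t + - / 2) with (t - / 2) by ring; [lra|].
  field. lra.
Qed.

Lemma one_add_theta_tan_sqr t : 0 < t < 1 -> 1 + theta_tan t ^ 2 = / sin (PI * t) ^ 2.
Proof.
  intros Ht. pose proof (sin_PI_mul_pos t Ht) as Hs. rewrite <- cos_theta_tan_arg in Hs |- *.
  pose proof (sin2_cos2 (PI * (t - / 2))) as E. unfold theta_tan, tan, Rsqr in *.
  transitivity ((sin (PI * (t - / 2)) * sin (PI * (t - / 2)) + cos (PI * (t - / 2)) * cos (PI * (t - / 2)))
                / cos (PI * (t - / 2)) ^ 2); [field; lra|].
  rewrite E. field. lra.
Qed.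

Lemma sin_PI_mul_le t : 0 < t < 1 -> sin (PI * t) <= PI * t /\ sin (PI * t) <= PI * (1 - t).
Proof.
  intros. pose proof PI_RGT_0. split.
  - left. apply sin_lt_x. nra.
  - replace (sin (PI * t)) with (sin (PI * (1 - t))) by (rewrite <- sin_PI_x; f_equal; ring).
    left. apply sin_lt_x. nra.
Qed.

Lemma theta_tan_neg t : 0 < t < / 2 -> theta_tan t < 0.
Proof. intros. apply tan_lt_0; pose proof PI_RGT_0; nra. Qed.

Lemma theta_tan_pos t : / 2 < t < 1 -> 0 < theta_tan t.
Proof. intros. apply tan_gt_0; pose proof PI_RGT_0; nra. Qed.

Lemma theta_le0 t : t <= 0 -> theta t = 1.
Proof. intros. unfold theta. destruct (Rle_dec t 0); [reflexivity | lra]. Qed.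

Lemma theta_ge1 t : 1 <= t -> theta t = 0.
Proof. intros. unfold theta. destruct (Rle_dec t 0); [lra|]. destruct (Rle_dec 1 t); [reflexivity | lra]. Qed.

Lemma theta_in t : 0 < t < 1 -> theta t = / 2 - gauss_prim (theta_tan t) / sqrt PI.
Proof.
  intros Ht. pose proof sqrt_PI_pos. unfold theta.
  destruct (Rle_dec t 0); [lra|]. destruct (Rle_dec 1 t); [lra|].
  rewrite G_gauss_prim. fold (theta_tan t). field. lra.
Qed.

Lemma theta_range t : 0 <= theta t <= 1.
Proof.
  destruct (Rle_dec t 0); [rewrite theta_le0; lra|].
  destruct (Rle_dec 1 t); [rewrite theta_ge1; lra|].
  rewrite theta_in by lra. pose proof sqrt_PI_pos.
  pose proof (Rabs_gauss_prim_le (theta_tan t)) as Hp. set (p := gauss_prim (theta_tan t)) in *.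
  pose proof (Rle_abs p). pose proof (Rle_abs (- p)). rewrite Rabs_Ropp in *.
  replace (/ 2 - p / sqrt PI) with ((sqrt PI / 2 - p) / sqrt PI) by (field; lra).
  split; [apply Rdiv_le_0_compat; lra|].
  apply Rmult_le_reg_r with (sqrt PI); [lra|]. unfold Rdiv. rewrite Rmult_assoc, Rinv_l; lra.
Qed.

Definition Cg : R := 120 * exp 1 * PI ^ 2.

Lemma Cg_pos : 0 < Cg.
Proof. unfold Cg. pose proof (exp_pos 1). pose proof PI_RGT_0. apply Rmult_lt_0_compat; [lra | nra]. Qed.

(* With [s = 1 + theta_tan t ^ 2 = / sin (PI t) ^ 2], the Gaussian factor
   [exp (- theta_tan t ^ 2) = e * exp (- s)] beats any power of [s]. *)
Lemma gauss_theta_tan_mul_pow4_le t : 0 < t < 1 ->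
  gauss (theta_tan t) * (1 + theta_tan t ^ 2) ^ 4 <= Cg * t ^ 2 /\
  gauss (theta_tan t) * (1 + theta_tan t ^ 2) ^ 4 <= Cg * (1 - t) ^ 2.
Proof.
  intros Ht. pose proof (one_add_theta_tan_sqr t Ht) as Es. pose proof (sin_PI_mul_pos t Ht).
  destruct (sin_PI_mul_le t Ht) as [Hl Hr]. pose proof (exp_pos 1).
  set (s := 1 + theta_tan t ^ 2) in *.
  assert (Hs : 1 <= s) by (unfold s; nra).
  assert (E1 : gauss (theta_tan t) = exp 1 * exp (- s))
    by (unfold gauss; rewrite <- exp_plus; f_equal; unfold s; ring).
  assert (E5 : s ^ 5 <= 120 * exp s).
  { replace 120 with (INR (Factorial.fact 5)) by (simpl; lra). apply pow_le_fact_mul_exp; lra. }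
  assert (Hsin : s * sin (PI * t) ^ 2 = 1) by (rewrite Es; field; lra).
  assert (Hk : gauss (theta_tan t) * s ^ 4 <= 120 * exp 1 * sin (PI * t) ^ 2).
  { rewrite E1. pose proof (exp_pos s). rewrite exp_Ropp.
    apply Rmult_le_reg_r with (exp s * s); [nra|].
    replace (exp 1 * / exp s * s ^ 4 * (exp s * s)) with (exp 1 * s ^ 5) by (field; lra).
    replace (120 * exp 1 * sin (PI * t) ^ 2 * (exp s * s))
      with (exp 1 * (120 * exp s) * (s * sin (PI * t) ^ 2)) by ring.
    rewrite Hsin, Rmult_1_r.
    apply Rmult_le_compat_l; lra. }
  unfold Cg. pose proof PI_RGT_0. split; eapply Rle_trans; try apply Hk;
    rewrite !Rmult_assoc; apply Rmult_le_compat_l; try lra; apply Rmult_le_compat_l; try lra;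
    rewrite <- Rpow_mult_distr; apply pow_incr; lra.
Qed.

(* The derivatives of [theta] have the shape [gauss_tan q] for polynomials [q]. *)
Definition gauss_tan (q : R -> R) (t : R) : R :=
  if Rlt_dec 0 t then if Rlt_dec t 1 then gauss (theta_tan t) * q (theta_tan t) else 0 else 0.

Lemma gauss_tan_in q t : 0 < t < 1 -> gauss_tan q t = gauss (theta_tan t) * q (theta_tan t).
Proof.
  intros Ht. unfold gauss_tan. destruct (Rlt_dec 0 t); [|lra]. destruct (Rlt_dec t 1); [reflexivity | lra].
Qed.

Lemma gauss_tan_out q t : t <= 0 \/ 1 <= t -> gauss_tan q t = 0.
Proof. intros. unfold gauss_tan. destruct (Rlt_dec 0 t); auto. destruct (Rlt_dec t 1); auto. lra. Qed.

Section GaussTanBound.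

Variables (q : R -> R) (C : R).
Hypothesis q_bound : forall y, Rabs (q y) <= C * (1 + y ^ 2) ^ 4.

Lemma gauss_tan_bound_nonneg : 0 <= C.
Proof. pose proof (q_bound 0). pose proof (Rabs_pos (q 0)). simpl in *. lra. Qed.

Lemma Rabs_gauss_tan_le t :
  Rabs (gauss_tan q t) <= C * Cg * t ^ 2 /\ Rabs (gauss_tan q t) <= C * Cg * (1 - t) ^ 2.
Proof.
  pose proof gauss_tan_bound_nonneg as HC.
  pose proof Cg_pos.
  destruct (Rlt_dec 0 t); [destruct (Rlt_dec t 1)|].
  - rewrite gauss_tan_in by lra. destruct (gauss_theta_tan_mul_pow4_le t) as [H1 H2]; [lra|].
    pose proof (exp_pos (- theta_tan t ^ 2)). pose proof (q_bound (theta_tan t)).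
    rewrite Rabs_mult, (Rabs_right (gauss _)) by (unfold gauss; lra).
    assert (gauss (theta_tan t) * Rabs (q (theta_tan t))
            <= C * (gauss (theta_tan t) * (1 + theta_tan t ^ 2) ^ 4)).
    { unfold gauss in *. nra. }
    split; eapply Rle_trans; try eassumption; rewrite Rmult_assoc; apply Rmult_le_compat_l; lra.
  - rewrite gauss_tan_out, Rabs_R0 by lra. split; apply Rmult_le_pos; nra.
  - rewrite gauss_tan_out, Rabs_R0 by lra. split; apply Rmult_le_pos; nra.
Qed.

Lemma Rabs_gauss_tan_le_const t : Rabs (gauss_tan q t) <= C * Cg.
Proof.
  pose proof gauss_tan_bound_nonneg. pose proof Cg_pos.
  destruct (Rlt_dec 0 t); [destruct (Rlt_dec t 1)|].
  - destruct (Rabs_gauss_tan_le t) as [H1 _].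
    assert (C * Cg * t ^ 2 <= C * Cg * 1) by (apply Rmult_le_compat_l; [nra | simpl; nra]). lra.
  - rewrite gauss_tan_out, Rabs_R0 by lra. nra.
  - rewrite gauss_tan_out, Rabs_R0 by lra. nra.
Qed.

Variable dq : R -> R.
Hypothesis q_derive : forall y, is_derive q y (dq y).

Lemma is_derive_gauss_tan t :
  is_derive (gauss_tan q) t (gauss_tan (fun y => PI * (1 + y ^ 2) * (dq y - 2 * y * q y)) t).
Proof.
  pose proof Cg_pos as HCg. pose proof gauss_tan_bound_nonneg as HC.
  destruct (Rtotal_order t 0) as [H0|[H0|H0]];
    [|subst t | destruct (Rtotal_order t 1) as [H1|[H1|H1]]; [|subst t|]].
  - rewrite gauss_tan_out by lra. apply (is_derive_loc_const _ (t - 1) 0 0); [lra|].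
    intros; apply gauss_tan_out; lra.
  - rewrite gauss_tan_out by lra. apply (is_derive_zero_of_sqr_bound _ 0 (C * Cg) 1); [lra | nra|].
    intros h _. rewrite Rplus_0_l, (gauss_tan_out q 0), Rminus_0_r by lra. apply Rabs_gauss_tan_le.
  - rewrite gauss_tan_in by lra.
    apply is_derive_ext_loc with (f := fun s => gauss (theta_tan s) * q (theta_tan s)).
    { generalize (locally_open_interval 0 1 t (conj H0 H1)). apply filter_imp.
      intros s Hs. rewrite gauss_tan_in; auto. }
    pose proof (is_derive_theta_tan t (conj H0 H1)). pose proof (q_derive (theta_tan t)).
    evar (l : R). replace (gauss (theta_tan t) * _) with l.
    + apply (is_derive_comp (fun y => gauss y * q y) theta_tan); [|eassumption].
      unfold gauss. apply (@is_derive_mult R_AbsRing); [|eassumption|intros; apply Rmult_comm].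
      auto_derive; [easy | reflexivity].
    + unfold l, gauss, scal, plus; simpl; unfold mult; simpl. ring.
  - rewrite gauss_tan_out by lra. apply (is_derive_zero_of_sqr_bound _ 1 (C * Cg) 1); [lra | nra|].
    intros h _. rewrite (gauss_tan_out q 1), Rminus_0_r by lra.
    replace (h ^ 2) with ((1 - (1 + h)) ^ 2) by ring. apply Rabs_gauss_tan_le.
  - rewrite gauss_tan_out by lra. apply (is_derive_loc_const _ 1 (t + 1) 0); [lra|].
    intros; apply gauss_tan_out; lra.
Qed.

End GaussTanBound.

Lemma Rabs_theta_sub_le t :
  (0 < t < / 2 -> Rabs (theta t - 1) <= Cg * t ^ 2) /\ (/ 2 < t < 1 -> Rabs (theta t) <= Cg * (1 - t) ^ 2).
Proof.
  pose proof sqrt_PI_pos. pose proof (sqrt_sqrt PI (Rlt_le _ _ PI_RGT_0)) as Hsq. pose proof PI2_3_2.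
  assert (Hg : forall y, 2 * gauss y / sqrt PI / sqrt PI <= gauss y * (1 + y ^ 2) ^ 4).
  { intros y. assert (1 <= (1 + y ^ 2) ^ 4) by (apply pow_R1_Rle; nra).
    pose proof (exp_pos (- y ^ 2)). unfold gauss in *. unfold Rdiv.
    rewrite Rmult_assoc, <- Rinv_mult, Hsq.
    apply Rle_trans with (exp (- y ^ 2) * 1); [|apply Rmult_le_compat_l; lra].
    apply Rmult_le_reg_r with PI; [lra|]. rewrite Rmult_assoc, Rinv_l by lra. nra. }
  split; intros Ht; rewrite theta_in by lra.
  - pose proof (theta_tan_neg t Ht). pose proof (gauss_prim_tail (- theta_tan t)) as Htail.
    replace (/ 2 - gauss_prim (theta_tan t) / sqrt PI - 1)
      with ((gauss_prim (- theta_tan t) - sqrt PI / 2) / sqrt PI)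
      by (rewrite gauss_prim_opp; field; lra).
    rewrite Rabs_div_pos; [|lra].
    apply Rle_trans with (2 * gauss (theta_tan t) / sqrt PI / sqrt PI).
    + unfold Rdiv. apply Rmult_le_compat_r; [left; apply Rinv_0_lt_compat; lra|].
      replace (gauss (theta_tan t)) with (gauss (- theta_tan t)) by (unfold gauss; f_equal; ring).
      apply Htail; lra.
    + eapply Rle_trans; [apply Hg | apply gauss_theta_tan_mul_pow4_le; lra].
  - pose proof (theta_tan_pos t Ht). pose proof (gauss_prim_tail (theta_tan t)) as Htail.
    replace (/ 2 - gauss_prim (theta_tan t) / sqrt PI)
      with (- ((gauss_prim (theta_tan t) - sqrt PI / 2) / sqrt PI))
      by (field; lra).
    rewrite Rabs_Ropp, Rabs_div_pos; [|lra].
    apply Rle_trans with (2 * gauss (theta_tan t) / sqrt PI / sqrt PI).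
    + unfold Rdiv. apply Rmult_le_compat_r; [left; apply Rinv_0_lt_compat; lra|]. apply Htail; lra.
    + eapply Rle_trans; [apply Hg | apply gauss_theta_tan_mul_pow4_le; lra].
Qed.

Definition theta_poly (n : nat) (y : R) : R :=
  match n with
  | 0 => - sqrt PI * (1 + y ^ 2)
  | 1 => 2 * PI * sqrt PI * y ^ 3 * (1 + y ^ 2)
  | _ => 2 * PI ^ 2 * sqrt PI * (1 + y ^ 2) * (3 * y ^ 2 + 3 * y ^ 4 - 2 * y ^ 6)
  end.

Lemma ex_derive_theta_poly n y : ex_derive (theta_poly n) y.
Proof. destruct n as [|[|n]]; unfold theta_poly; auto_derive; easy. Qed.

Lemma theta_poly_succ n y : (n < 2)%nat ->
  PI * (1 + y ^ 2) * (Derive (theta_poly n) y - 2 * y * theta_poly n y) = theta_poly (S n) y.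
Proof.
  intros Hn. destruct n as [|[|n]]; [| |lia]; unfold theta_poly;
    (erewrite is_derive_unique; [|auto_derive; [easy | reflexivity]]); ring.
Qed.

Definition Cq : R := 16 * PI ^ 2 * sqrt PI.

Lemma Rabs_theta_poly_le n y : Rabs (theta_poly n y) <= Cq * (1 + y ^ 2) ^ 4.
Proof.
  pose proof sqrt_PI_pos. pose proof PI2_3_2.
  set (s := 1 + y ^ 2). assert (Hs : 1 <= s) by (unfold s; nra).
  assert (Hy : Rabs y <= s) by (unfold s, Rabs; destruct (Rcase_abs y); nra).
  assert (Hs4 : s <= s ^ 4).
  { replace (s ^ 4) with (s * s ^ 3) by ring. pose proof (pow_R1_Rle s 3 Hs). nra. }
  assert (HC : 0 < PI * sqrt PI) by nra.
  unfold Cq, theta_poly. destruct n as [|[|n]]; fold s.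
  - rewrite Rabs_mult, Rabs_Ropp, (Rabs_right (sqrt PI)), (Rabs_right s) by lra.
    assert (1 <= 16 * PI ^ 2) by (simpl; nra).
    assert (sqrt PI * s <= sqrt PI * s ^ 4) by (apply Rmult_le_compat_l; lra).
    assert (0 <= sqrt PI * s ^ 4) by nra. nra.
  - rewrite !Rabs_mult, <- RPow_abs, (Rabs_right 2), (Rabs_right PI), (Rabs_right (sqrt PI)),
      (Rabs_right s) by lra.
    assert (Rabs y ^ 3 * s <= s ^ 4).
    { replace (s ^ 4) with (s ^ 3 * s) by ring. apply Rmult_le_compat_r; [lra|].
      apply pow_incr. split; [apply Rabs_pos | exact Hy]. }
    assert (0 <= Rabs y ^ 3 * s) by (apply Rmult_le_pos; [apply pow_le, Rabs_pos | lra]).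
    replace (2 * PI * sqrt PI * Rabs y ^ 3 * s) with (2 * (PI * sqrt PI) * (Rabs y ^ 3 * s)) by ring.
    replace (16 * PI ^ 2 * sqrt PI * s ^ 4) with (16 * PI * (PI * sqrt PI) * s ^ 4) by ring.
    apply Rle_trans with (2 * (PI * sqrt PI) * s ^ 4); [apply Rmult_le_compat_l; lra|].
    apply Rmult_le_compat_r; nra.
  - assert (E : 3 * y ^ 2 + 3 * y ^ 4 - 2 * y ^ 6 = 3 * (s - 1) + 3 * (s - 1) ^ 2 - 2 * (s - 1) ^ 3)
      by (unfold s; ring).
    rewrite E, !Rabs_mult, (Rabs_right 2), (Rabs_right (PI ^ 2)), (Rabs_right (sqrt PI)),
      (Rabs_right s) by nra.
    assert (B : Rabs (3 * (s - 1) + 3 * (s - 1) ^ 2 - 2 * (s - 1) ^ 3) <= 8 * s ^ 3)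
      by (apply Rabs_le; split; nra).
    assert (0 <= 2 * PI ^ 2 * sqrt PI) by nra.
    replace (16 * PI ^ 2 * sqrt PI * s ^ 4) with (2 * PI ^ 2 * sqrt PI * s * (8 * s ^ 3)) by ring.
    apply Rmult_le_compat_l; [nra | exact B].
Qed.

Definition dtheta (n : nat) : R -> R :=
  match n with
  | 0 => theta
  | S m => gauss_tan (theta_poly m)
  end.

Definition Ktheta : R := Cq * Cg.

Lemma is_derive_theta t : is_derive theta t (dtheta 1 t).
Proof.
  pose proof Cg_pos. simpl dtheta.
  destruct (Rtotal_order t 0) as [H0|[H0|H0]];
    [|subst t | destruct (Rtotal_order t 1) as [H1|[H1|H1]]; [|subst t|]].
  - rewrite gauss_tan_out by lra. apply (is_derive_loc_const _ (t - 1) 0 1); [lra|].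
    intros; apply theta_le0; lra.
  - rewrite gauss_tan_out by lra. apply (is_derive_zero_of_sqr_bound _ 0 Cg (/ 2)); [lra | lra|].
    intros h Hh. rewrite Rplus_0_l, (theta_le0 0) by lra. apply Rabs_def2 in Hh.
    destruct (Rle_dec h 0).
    + rewrite theta_le0, Rminus_diag, Rabs_R0 by lra. nra.
    + apply Rabs_theta_sub_le. lra.
  - rewrite gauss_tan_in by lra.
    apply is_derive_ext_loc with (f := fun s => / 2 - gauss_prim (theta_tan s) / sqrt PI).
    { generalize (locally_open_interval 0 1 t (conj H0 H1)). apply filter_imp.
      intros s Hs. rewrite theta_in; auto. }
    pose proof sqrt_PI_pos. pose proof (sqrt_sqrt PI (Rlt_le _ _ PI_RGT_0)) as Hsq.
    replace (gauss (theta_tan t) * theta_poly 0 (theta_tan t))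
      with (PI * (1 + theta_tan t ^ 2) * (- gauss (theta_tan t) / sqrt PI)).
    + apply (is_derive_comp (fun y => / 2 - gauss_prim y / sqrt PI) theta_tan);
        [|apply is_derive_theta_tan; lra].
      auto_derive; [eexists; apply is_derive_gauss_prim|].
      change (fun x => gauss_prim x) with gauss_prim. rewrite Derive_gauss_prim. unfold Rdiv. ring.
    + unfold theta_poly. pattern PI at 1. rewrite <- Hsq. field. lra.
  - rewrite gauss_tan_out by lra. apply (is_derive_zero_of_sqr_bound _ 1 Cg (/ 2)); [lra | lra|].
    intros h Hh. rewrite (theta_ge1 1), Rminus_0_r by lra. apply Rabs_def2 in Hh.
    destruct (Rle_dec 0 h).
    + rewrite theta_ge1, Rabs_R0 by lra. nra.
    + replace (h ^ 2) with ((1 - (1 + h)) ^ 2) by ring. apply Rabs_theta_sub_le. lra.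
  - rewrite gauss_tan_out by lra. apply (is_derive_loc_const _ 1 (t + 1) 0); [lra|].
    intros; apply theta_ge1; lra.
Qed.

Lemma is_derive_dtheta n t : (n < 3)%nat -> is_derive (dtheta n) t (dtheta (S n) t).
Proof.
  intros Hn. destruct n as [|m]; [apply is_derive_theta|].
  replace (dtheta (S (S m)) t)
    with (gauss_tan (fun y => PI * (1 + y ^ 2) * (Derive (theta_poly m) y - 2 * y * theta_poly m y)) t).
  - apply is_derive_gauss_tan with (C := Cq); [apply Rabs_theta_poly_le|].
    intros y. apply Derive_correct, ex_derive_theta_poly.
  - unfold gauss_tan. rewrite theta_poly_succ by lia. reflexivity.
Qed.

Lemma continuous_dtheta n t : continuous (dtheta n) t.
Proof.
  apply (@ex_derive_continuous R_AbsRing R_NormedModule).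
  destruct n as [|m]; [eexists; apply is_derive_theta|].
  eexists. apply is_derive_gauss_tan with (C := Cq); [apply Rabs_theta_poly_le|].
  intros y. apply Derive_correct, ex_derive_theta_poly.
Qed.

Lemma Rabs_dtheta_le n t : (0 < n)%nat -> Rabs (dtheta n t) <= Ktheta.
Proof.
  intros Hn. destruct n as [|m]; [lia|]. apply Rabs_gauss_tan_le_const, Rabs_theta_poly_le.
Qed.

Lemma dtheta_out n t : (0 < n)%nat -> t <= 0 \/ 1 <= t -> dtheta n t = 0.
Proof. intros Hn Ht. destruct n as [|m]; [lia|]. apply gauss_tan_out, Ht. Qed.

Lemma Ktheta_ge1 : 1 <= Ktheta.
Proof.
  unfold Ktheta, Cq, Cg. pose proof PI2_3_2. pose proof sqrt_PI_pos.
  assert (1 <= sqrt PI) by (rewrite <- sqrt_1; apply sqrt_le_1; lra).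
  assert (2 <= exp 1) by (pose proof (exp_ineq1_le 1); lra).
  assert (1 <= 16 * PI ^ 2 * sqrt PI) by (simpl; nra).
  assert (1 <= 120 * exp 1 * PI ^ 2) by (simpl; nra). nra.
Qed.

(** * Rescaled cutoffs and the two-mode form of [u] *)

Definition ramp (n : nat) (c w t : R) : R := dtheta n ((t - c) / w) / w ^ n.

Section Ramp.

Variables (c w : R).
Hypothesis w_pos : 0 < w.

Lemma is_derive_ramp n t : (n < 3)%nat -> is_derive (ramp n c w) t (ramp (S n) c w t).
Proof.
  intros Hn. unfold ramp. pose proof (pow_lt w n w_pos).
  evar (l : R). replace (dtheta (S n) ((t - c) / w) / w ^ S n) with l.
  - apply (is_derive_comp (fun s => dtheta n s / w ^ n) (fun t => (t - c) / w)).
    + auto_derive; [eexists; apply is_derive_dtheta, Hn | reflexivity].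
    + auto_derive; [lra | reflexivity].
  - unfold l, scal; simpl; unfold mult; simpl.
    change (fun x => dtheta n x) with (dtheta n).
    rewrite (is_derive_unique _ _ _ (is_derive_dtheta n _ Hn)). simpl. field. lra.
Qed.

Lemma Derive_ramp n t : (n < 3)%nat -> Derive (fun s => ramp n c w s) t = ramp (S n) c w t.
Proof. intros. apply is_derive_unique, is_derive_ramp; assumption. Qed.

Lemma ex_derive_ramp n t : (n < 3)%nat -> ex_derive (fun s => ramp n c w s) t.
Proof. intros. eexists. apply is_derive_ramp; assumption. Qed.

Lemma continuous_ramp n t : continuous (ramp n c w) t.
Proof.
  unfold ramp. apply (continuous_comp (fun t => (t - c) / w) (fun s => dtheta n s / w ^ n)).
  - apply (@ex_derive_continuous R_AbsRing R_NormedModule). auto_derive. lra.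
  - apply (continuous_scal_l (K := R_AbsRing) (V := R_NormedModule) (dtheta n) (/ w ^ n)),
      continuous_dtheta.
Qed.

Lemma Rabs_ramp_le n t : Rabs (ramp n c w t) <= Ktheta / w ^ n.
Proof.
  unfold ramp. pose proof (pow_lt w n w_pos). rewrite Rabs_div_pos by lra.
  unfold Rdiv. apply Rmult_le_compat_r; [left; apply Rinv_0_lt_compat; lra|].
  destruct n as [|m].
  - pose proof (theta_range ((t - c) / w)). pose proof Ktheta_ge1. simpl. rewrite Rabs_right; lra.
  - apply Rabs_dtheta_le. lia.
Qed.

Lemma ramp0_range t : 0 <= ramp 0 c w t <= 1.
Proof. unfold ramp. simpl. rewrite Rdiv_1_r. apply theta_range. Qed.

Lemma ramp0_before t : t <= c -> ramp 0 c w t = 1.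
Proof.
  intros. unfold ramp. simpl. rewrite theta_le0; [field|].
  unfold Rdiv. apply Rmult_le_0_r; [lra | left; apply Rinv_0_lt_compat, w_pos].
Qed.

Lemma ramp0_after t : c + w <= t -> ramp 0 c w t = 0.
Proof.
  intros. unfold ramp. simpl. rewrite theta_ge1; [field|].
  apply Rmult_le_reg_r with w; [exact w_pos|]. unfold Rdiv. rewrite Rmult_assoc, Rinv_l; lra.
Qed.

Lemma ramp_out n t : (0 < n)%nat -> t <= c \/ c + w <= t -> ramp n c w t = 0.
Proof.
  intros Hn Ht. unfold ramp. rewrite dtheta_out; [unfold Rdiv; ring | exact Hn|].
  destruct Ht; [left | right].
  - unfold Rdiv. apply Rmult_le_0_r; [lra | left; apply Rinv_0_lt_compat, w_pos].
  - apply Rmult_le_reg_r with w; [exact w_pos|]. unfold Rdiv. rewrite Rmult_assoc, Rinv_l; lra.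
Qed.

End Ramp.

(* Time profiles of the two modes of [u] and their derivatives: [fprof w 0] switches [f] off on
   [[w, 2w]] and [gprof w 0] switches [g] on on [[0, w]]. *)
Definition fprof (w : R) (n : nat) : R -> R := ramp n w w.

Definition gprof (w : R) (n : nat) (t : R) : R :=
  match n with
  | 0 => 1 - ramp 0 0 w t
  | S _ => - ramp n 0 w t
  end.

Section Profiles.

Variable w : R.
Hypothesis w_pos : 0 < w.

Lemma is_derive_fprof n t : (n < 3)%nat -> is_derive (fprof w n) t (fprof w (S n) t).
Proof. apply is_derive_ramp, w_pos. Qed.

Lemma is_derive_gprof n t : (n < 3)%nat -> is_derive (gprof w n) t (gprof w (S n) t).
Proof.
  intros Hn. destruct n; unfold gprof; auto_derive; try (apply ex_derive_ramp; assumption);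
    rewrite Derive_ramp by assumption; ring.
Qed.

Lemma Rabs_fprof_le n t : Rabs (fprof w n t) <= Ktheta / w ^ n.
Proof. apply Rabs_ramp_le, w_pos. Qed.

Lemma Rabs_gprof_le n t : Rabs (gprof w n t) <= Ktheta / w ^ n.
Proof.
  destruct n as [|m]; simpl gprof.
  - pose proof (ramp0_range 0 w t). pose proof Ktheta_ge1. simpl. rewrite Rdiv_1_r, Rabs_right; lra.
  - rewrite Rabs_Ropp. apply Rabs_ramp_le, w_pos.
Qed.

Lemma fprof0_before t : t <= w -> fprof w 0 t = 1.
Proof. intros. apply ramp0_before; assumption. Qed.

Lemma gprof0_after t : w <= t -> gprof w 0 t = 1.
Proof. intros. simpl. rewrite ramp0_after by (assumption || lra). ring. Qed.

Lemma fprof_out n t : (0 < n)%nat -> t <= w \/ 2 * w <= t -> fprof w n t = 0.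
Proof. intros. apply ramp_out; [assumption | assumption | lra]. Qed.

Lemma gprof_out n t : (0 < n)%nat -> t <= 0 \/ w <= t -> gprof w n t = 0.
Proof.
  intros Hn Ht. destruct n as [|m]; [lia|]. simpl gprof.
  rewrite ramp_out; [ring | assumption | assumption | lra].
Qed.

End Profiles.

Definition mode2 (a p : R -> R) (K : R) (b q : R -> R) (K' : R) : fn3 :=
  fun x y t => a t * p x * exp (- K * t) + b t * q y * exp (- K' * t).

Lemma u_fun_mode2 k k' w : 0 < w ->
  u_fun k k' w = mode2 (fprof w 0) (fun x => cos (INR k * x)) (INR k)
                       (gprof w 0) (fun y => cos (INR k' * y)) (INR k').
Proof.
  intros Hw. do 3 (apply functional_extensionality; intro).
  unfold u_fun, mode2, f_fun, g_fun. destruct (Rle_dec _ w).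
  - rewrite fprof0_before by assumption. simpl. unfold ramp. simpl.
    rewrite Rminus_0_r, Rdiv_1_r. ring.
  - rewrite gprof0_after by lra. unfold fprof, ramp. simpl. rewrite Rdiv_1_r. ring.
Qed.

Section Mode2Derivatives.

Variables (a p b q : R -> R) (K K' : R).

Lemma pd_x_mode2 dp : (forall x : R, is_derive p x (dp x)) ->
  pd Defs.Dx (mode2 a p K b q K') = mode2 a dp K b (fun _ => 0) K'.
Proof.
  intros Hp. do 3 (apply functional_extensionality; intro). simpl. apply is_derive_unique.
  unfold mode2. auto_derive; [eexists; apply Hp|].
  change (fun x => p x) with p. rewrite (is_derive_unique _ _ _ (Hp _)). ring.
Qed.

Lemma pd_y_mode2 dq : (forall y : R, is_derive q y (dq y)) ->
  pd Dy (mode2 a p K b q K') = mode2 a (fun _ => 0) K b dq K'.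
Proof.
  intros Hq. do 3 (apply functional_extensionality; intro). simpl. apply is_derive_unique.
  unfold mode2. auto_derive; [eexists; apply Hq|].
  change (fun y => q y) with q. rewrite (is_derive_unique _ _ _ (Hq _)). ring.
Qed.

Lemma pd_t_mode2 da db : (forall t : R, is_derive a t (da t)) -> (forall t : R, is_derive b t (db t)) ->
  pd Dt (mode2 a p K b q K') = mode2 (fun t => da t - K * a t) p K (fun t => db t - K' * b t) q K'.
Proof.
  intros Ha Hb. do 3 (apply functional_extensionality; intro). simpl. apply is_derive_unique.
  unfold mode2. auto_derive; [split; [eexists; apply Ha | split; [eexists; apply Hb | easy]]|].
  change (fun t => a t) with a. change (fun t => b t) with b.
  rewrite (is_derive_unique _ _ _ (Ha _)), (is_derive_unique _ _ _ (Hb _)). ring.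
Qed.

End Mode2Derivatives.

(** * The coefficient matrix *)

Definition coef (a1 a2 : R -> R) (L lam N t : R) : R :=
  (a2 t - 2 * L * a1 t) * exp (lam * t) / (N * N).

Definition dcoef (a1 a2 a3 : R -> R) (L lam N t : R) : R :=
  (a3 t - 2 * L * a2 t + lam * (a2 t - 2 * L * a1 t)) * exp (lam * t) / (N * N).

Lemma coef_dcoef_zero (a1 a2 a3 : R -> R) (L lam N t : R) : a1 t = 0 -> a2 t = 0 -> a3 t = 0 ->
  coef a1 a2 L lam N t = 0 /\ dcoef a1 a2 a3 L lam N t = 0.
Proof. intros H1 H2 H3. unfold coef, dcoef. rewrite H1, H2, H3. split; unfold Rdiv; ring. Qed.

Section Coef.

Variables (a1 a2 a3 : R -> R) (L lam N : R).
Hypothesis N_pos : 0 < N.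
Hypotheses (a1_derive : forall t : R, is_derive a1 t (a2 t))
  (a2_derive : forall t : R, is_derive a2 t (a3 t)).

Lemma is_derive_coef (t : R) : is_derive (coef a1 a2 L lam N) t (dcoef a1 a2 a3 L lam N t).
Proof.
  unfold coef, dcoef.
  auto_derive; [split; [eexists; apply a2_derive | split; [eexists; apply a1_derive | exact I]]|].
  change (fun t => a1 t) with a1. change (fun t => a2 t) with a2.
  rewrite (is_derive_unique _ _ _ (a1_derive t)), (is_derive_unique _ _ _ (a2_derive t)).
  field. lra.
Qed.

Lemma continuous_dcoef (t : R) : (forall s : R, continuous a3 s) -> continuous (dcoef a1 a2 a3 L lam N) t.
Proof.
  intros Ha3. unfold dcoef.
  apply (continuous_ext_R (fun t => a3 t * (exp (lam * t) / (N * N))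
    + (- 2 * L * a2 t + lam * (a2 t - 2 * L * a1 t)) * exp (lam * t) / (N * N))).
  { intros s. field. lra. }
  apply (continuous_plus (V := R_NormedModule)).
  - apply (continuous_mult (K := R_AbsRing)); [apply Ha3|].
    apply (@ex_derive_continuous R_AbsRing R_NormedModule). auto_derive. easy.
  - apply (@ex_derive_continuous R_AbsRing R_NormedModule).
    assert (ex_derive a1 t) by (eexists; apply a1_derive).
    assert (ex_derive a2 t) by (eexists; apply a2_derive).
    auto_derive. tauto.
Qed.

End Coef.

Definition sep (c : R) (g p q : R -> R) : fn3 := fun x y t => c + g t * p x * q y.

Definition acoef (K K' w : R) : R -> R := coef (gprof w 1) (gprof w 2) K' (K - K') K.
Definition bcoef (K K' w : R) : R -> R := coef (fprof w 1) (fprof w 2) K (K' - K) K'.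

Definition trig (i j : sdir) (L x : R) : R :=
  match i, j with
  | Sx, Sx | Sy, Sy => cos (L * x)
  | _, _ => sin (L * x)
  end.

Definition Acoef (K K' w : R) (i j : sdir) (t : R) : R :=
  match i, j with
  | Sx, Sx => acoef K K' w t
  | Sx, Sy => 2 * K' / K * bcoef K K' w t
  | Sy, Sx => 2 * K / K' * acoef K K' w t
  | Sy, Sy => bcoef K K' w t
  end.

Definition Amat (K K' w : R) (i j : sdir) : fn3 :=
  sep (delta i j) (Acoef K K' w i j) (trig i j K) (trig i j K').

(* The wave equation at one point: [a_i], [b_i] are the profiles [fprof w i t], [gprof w i t],
   [c_i], [s_i] the cosines and sines, [e_i] the exponentials; the last two hypotheses are
   [acoef_mul_mode] and [bcoef_mul_mode]. *)
Lemma wave_identity (a0 a1 a2 b0 b1 b2 K K' c1 s1 c2 s2 e1 e2 ca cb : R) :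
  s1 * s1 + c1 * c1 = 1 -> s2 * s2 + c2 * c2 = 1 ->
  ca * K * K * a0 * e1 = (b2 - 2 * K' * b1) * e2 ->
  cb * K' * K' * b0 * e2 = (a2 - 2 * K * a1) * e1 ->
  ((a2 - K * a1 - K * (a1 - K * a0)) * c1 * e1 + (b2 - K' * b1 - K' * (b1 - K' * b0)) * c2 * e2)
  + (- K * K * a0 * e1 * (c1 + ca * c2 * (c1 * c1 - s1 * s1)) - 2 * K' * K' * cb * b0 * e2 * c1 * s2 * s2)
  + (- 2 * K * K * ca * a0 * e1 * s1 * s1 * c2 - K' * K' * b0 * e2 * (c2 + cb * c1 * (c2 * c2 - s2 * s2)))
  = 0.
Proof.
  intros H1 H2 H3 H4.
  transitivity ((a2 - 2 * K * a1) * e1 * c1 + (b2 - 2 * K' * b1) * e2 * c2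
    - (ca * K * K * a0 * e1) * c2 * (s1 * s1 + c1 * c1)
    - (cb * K' * K' * b0 * e2) * c1 * (s2 * s2 + c2 * c2)).
  - ring.
  - rewrite H1, H2, H3, H4. ring.
Qed.

Section WaveEquation.

Variables (K K' w : R).
Hypotheses (w_pos : 0 < w) (K_pos : 0 < K) (K'_pos : 0 < K').

Lemma fprof0_mul_gprof_sum t :
  fprof w 0 t * (gprof w 2 t - 2 * K' * gprof w 1 t) = gprof w 2 t - 2 * K' * gprof w 1 t.
Proof.
  destruct (Rle_dec t w).
  - rewrite fprof0_before by assumption. ring.
  - rewrite !gprof_out by (lia || lra || (right; lra)). ring.
Qed.

Lemma gprof0_mul_fprof_sum t :
  gprof w 0 t * (fprof w 2 t - 2 * K * fprof w 1 t) = fprof w 2 t - 2 * K * fprof w 1 t.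
Proof.
  destruct (Rle_dec w t).
  - rewrite gprof0_after by assumption. ring.
  - rewrite !fprof_out by (lia || lra || (left; lra)). ring.
Qed.

Lemma is_derive_cos_mul (L x : R) : is_derive (fun x => cos (L * x)) x (- L * sin (L * x)).
Proof. auto_derive; [easy | ring]. Qed.

Lemma is_derive_tprof (a : nat -> R -> R) (L t : R) :
  (forall n (t : R), (n < 3)%nat -> is_derive (a n) t (a (S n) t)) ->
  is_derive (fun t => a 1%nat t - L * a 0%nat t) t (a 2%nat t - L * a 1%nat t).
Proof.
  intros Ha. auto_derive; [repeat split; eexists; apply Ha; lia|].
  rewrite (is_derive_unique _ t (a 2%nat t)) by (apply Ha; lia).
  rewrite (is_derive_unique _ t (a 1%nat t)) by (apply Ha; lia). ring.
Qed.

Lemma acoef_mul_mode t :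
  acoef K K' w t * K * K * fprof w 0 t * exp (- K * t)
  = (gprof w 2 t - 2 * K' * gprof w 1 t) * exp (- K' * t).
Proof.
  unfold acoef, coef.
  transitivity (fprof w 0 t * (gprof w 2 t - 2 * K' * gprof w 1 t) * (exp ((K - K') * t) * exp (- K * t))).
  - field. lra.
  - rewrite fprof0_mul_gprof_sum, <- exp_plus. f_equal. f_equal. ring.
Qed.

Lemma bcoef_mul_mode t :
  bcoef K K' w t * K' * K' * gprof w 0 t * exp (- K' * t)
  = (fprof w 2 t - 2 * K * fprof w 1 t) * exp (- K * t).
Proof.
  unfold bcoef, coef.
  transitivity (gprof w 0 t * (fprof w 2 t - 2 * K * fprof w 1 t) * (exp ((K' - K) * t) * exp (- K' * t))).
  - field. lra.
  - rewrite gprof0_mul_fprof_sum, <- exp_plus. f_equal. f_equal. ring.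
Qed.

Lemma pd_x_Amat_flux (a b : R -> R) x y t :
  pd Defs.Dx (fun x y t =>
       Amat K K' w Sx Sx x y t * mode2 a (fun x => - K * sin (K * x)) K b (fun _ => 0) K' x y t
     + Amat K K' w Sx Sy x y t * mode2 a (fun _ => 0) K b (fun y => - K' * sin (K' * y)) K' x y t) x y t
  = - K * K * a t * exp (- K * t)
      * (cos (K * x)
         + acoef K K' w t * cos (K' * y) * (cos (K * x) * cos (K * x) - sin (K * x) * sin (K * x)))
    - 2 * K' * K' * bcoef K K' w t * b t * exp (- K' * t) * cos (K * x) * sin (K' * y) * sin (K' * y).
Proof.
  simpl. apply is_derive_unique. unfold Amat, sep, Acoef, trig, delta, mode2.
  auto_derive; [easy | field; lra].
Qed.

Lemma pd_y_Amat_flux (a b : R -> R) x y t :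
  pd Dy (fun x y t =>
       Amat K K' w Sy Sx x y t * mode2 a (fun x => - K * sin (K * x)) K b (fun _ => 0) K' x y t
     + Amat K K' w Sy Sy x y t * mode2 a (fun _ => 0) K b (fun y => - K' * sin (K' * y)) K' x y t) x y t
  = - 2 * K * K * acoef K K' w t * a t * exp (- K * t) * sin (K * x) * sin (K * x) * cos (K' * y)
    - K' * K' * b t * exp (- K' * t)
      * (cos (K' * y)
         + bcoef K K' w t * cos (K * x) * (cos (K' * y) * cos (K' * y) - sin (K' * y) * sin (K' * y))).
Proof.
  simpl. apply is_derive_unique. unfold Amat, sep, Acoef, trig, delta, mode2.
  auto_derive; [easy | field; lra].
Qed.

Lemma wave_op_Amat x y t :
  wave_op (Amat K K' w) (mode2 (fprof w 0) (fun x => cos (K * x)) K (gprof w 0) (fun y => cos (K' * y)) K')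
    x y t = 0.
Proof.
  assert (Hf : forall n (t : R), (n < 3)%nat -> is_derive (fprof w n) t (fprof w (S n) t))
    by (intros; apply is_derive_fprof; assumption).
  assert (Hg : forall n (t : R), (n < 3)%nat -> is_derive (gprof w n) t (gprof w (S n) t))
    by (intros; apply is_derive_gprof; assumption).
  unfold wave_op.
  rewrite (pd_t_mode2 _ _ _ _ _ _ (fprof w 1) (gprof w 1)) by (intros; apply Hf || apply Hg; lia).
  rewrite (pd_t_mode2 _ _ _ _ _ _ (fun t => fprof w 2 t - K * fprof w 1 t)
                                  (fun t => gprof w 2 t - K' * gprof w 1 t))
    by (intros; apply is_derive_tprof; assumption).
  rewrite (pd_x_mode2 _ _ _ _ _ _ _ (is_derive_cos_mul K)), (pd_y_mode2 _ _ _ _ _ _ _ (is_derive_cos_mul K')).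
  rewrite pd_x_Amat_flux, pd_y_Amat_flux. unfold mode2.
  apply wave_identity; [| | apply acoef_mul_mode | apply bcoef_mul_mode];
    match goal with |- sin ?z * _ + _ = 1 => pose proof (sin2_cos2 z) as E; unfold Rsqr in E; exact E end.
Qed.

End WaveEquation.

Lemma cont3_of_continuous (F : fn3) :
  (forall x y t, continuous (fun v : R * R * R => F (fst (fst v)) (snd (fst v)) (snd v)) (x, y, t)) ->
  cont3 F.
Proof.
  intros H x y t eps He.
  destruct (proj1 (filterlim_locally _ _) (H x y t) (mkposreal _ He)) as [d Hd].
  exists d. split; [apply cond_pos|]. intros x' y' t' H1 H2 H3.
  apply (Hd (x', y', t')). split; [split|]; assumption.
Qed.

Lemma cont3_sep (c : R) (g p q : R -> R) :
  (forall t, continuous g t) -> (forall x, continuous p x) -> (forall y, continuous q y) ->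
  cont3 (sep c g p q).
Proof.
  intros Hg Hp Hq. apply cont3_of_continuous. intros x y t. unfold sep.
  apply (continuous_plus (V := R_NormedModule) (fun _ => c)); [apply continuous_const|].
  apply (continuous_mult (K := R_AbsRing)); [apply (continuous_mult (K := R_AbsRing))|].
  - apply continuous_comp; [apply continuous_snd | apply Hg].
  - apply (continuous_comp (fun v : R * R * R => fst (fst v)) p); [|apply Hp].
    apply (continuous_comp fst fst); apply continuous_fst.
  - apply (continuous_comp (fun v : R * R * R => snd (fst v)) q); [|apply Hq].
    apply (continuous_comp fst snd); [apply continuous_fst | apply continuous_snd].
Qed.

Section Sep.

Variables (c : R) (g p q dg dp dq : R -> R).
Hypotheses (g_derive : forall t : R, is_derive g t (dg t)) (p_derive : forall x : R, is_derive p x (dp x))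
  (q_derive : forall y : R, is_derive q y (dq y)).

Lemma pd_sep (d : dir) :
  pd d (sep c g p q) =
  match d with
  | Defs.Dx => sep 0 g dp q
  | Dy => sep 0 g p dq
  | Dt => sep 0 dg p q
  end.
Proof.
  do 3 (apply functional_extensionality; intro). destruct d; simpl; apply is_derive_unique; unfold sep.
  - auto_derive; [eexists; apply p_derive|].
    change (fun x => p x) with p. rewrite (is_derive_unique _ _ _ (p_derive _)). ring.
  - auto_derive; [eexists; apply q_derive|].
    change (fun y => q y) with q. rewrite (is_derive_unique _ _ _ (q_derive _)). ring.
  - auto_derive; [eexists; apply g_derive|].
    change (fun t => g t) with g. rewrite (is_derive_unique _ _ _ (g_derive _)). ring.
Qed.

Lemma ex_pd_sep d x y t : ex_pd d (sep c g p q) x y t.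
Proof.
  destruct d; simpl; unfold sep; auto_derive.
  - eexists; apply p_derive.
  - eexists; apply q_derive.
  - eexists; apply g_derive.
Qed.

Lemma is_C1_sep : (forall t, continuous dg t) -> (forall x, continuous dp x) -> (forall y, continuous dq y) ->
  is_C1 (sep c g p q).
Proof.
  intros Cg Cp Cq.
  assert (Dc : forall (f df : R -> R), (forall s : R, is_derive f s (df s)) -> forall s, continuous f s).
  { intros f df Hf s. apply (@ex_derive_continuous R_AbsRing R_NormedModule). eexists. apply Hf. }
  split; [apply cont3_sep; eapply Dc; eassumption|].
  intros d. split; [intros; apply ex_pd_sep|].
  rewrite pd_sep. destruct d; apply cont3_sep; try assumption; eapply Dc; eassumption.
Qed.

End Sep.

Lemma periodic2_sep c g p q :
  (forall x, p (x + 2 * PI) = p x) -> (forall y, q (y + 2 * PI) = q y) -> periodic2 (sep c g p q).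
Proof. intros Hp Hq x y t. unfold sep. rewrite Hp, Hq. split; reflexivity. Qed.

Definition dtrig (i j : sdir) (L x : R) : R :=
  match i, j with
  | Sx, Sx | Sy, Sy => - L * sin (L * x)
  | _, _ => L * cos (L * x)
  end.

Lemma is_derive_trig i j (L x : R) : is_derive (trig i j L) x (dtrig i j L x).
Proof. destruct i, j; unfold trig, dtrig; auto_derive; try easy; ring. Qed.

Lemma continuous_dtrig i j (L x : R) : continuous (dtrig i j L) x.
Proof.
  apply (@ex_derive_continuous R_AbsRing R_NormedModule).
  destruct i, j; unfold dtrig; auto_derive; easy.
Qed.

Lemma trig_periodic i j (k : nat) (x : R) : trig i j (INR k) (x + 2 * PI) = trig i j (INR k) x.
Proof.
  unfold trig. replace (INR k * (x + 2 * PI)) with (INR k * x + 2 * INR k * PI) by ring.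
  destruct i, j; auto using cos_period, sin_period.
Qed.

Lemma Rabs_trig_le i j (L x : R) : Rabs (trig i j L x) <= 1.
Proof. destruct i, j; unfold trig; apply Rabs_le; auto using COS_bound, SIN_bound. Qed.

Lemma Rabs_dtrig_le i j (L x : R) : 0 <= L -> Rabs (dtrig i j L x) <= L.
Proof.
  intros HL. assert (Hc := Rabs_trig_le Sx Sx L x). assert (Hs := Rabs_trig_le Sx Sy L x).
  unfold trig in *. destruct i, j; unfold dtrig;
    rewrite Rabs_mult, ?Rabs_Ropp, Rabs_right by lra;
    (apply Rle_trans with (L * 1); [apply Rmult_le_compat_l; assumption | lra]).
Qed.

Definition dacoef (K K' w : R) : R -> R := dcoef (gprof w 1) (gprof w 2) (gprof w 3) K' (K - K') K.
Definition dbcoef (K K' w : R) : R -> R := dcoef (fprof w 1) (fprof w 2) (fprof w 3) K (K' - K) K'.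

Definition dAcoef (K K' w : R) (i j : sdir) (t : R) : R :=
  match i, j with
  | Sx, Sx => dacoef K K' w t
  | Sx, Sy => 2 * K' / K * dbcoef K K' w t
  | Sy, Sx => 2 * K / K' * dacoef K K' w t
  | Sy, Sy => dbcoef K K' w t
  end.

Section AmatProperties.

Variables (K K' w : R).
Hypotheses (w_pos : 0 < w) (K_pos : 0 < K) (K'_pos : 0 < K').

Lemma is_derive_acoef t : is_derive (acoef K K' w) t (dacoef K K' w t).
Proof. apply is_derive_coef; [assumption | |]; intros; apply is_derive_gprof; auto. Qed.

Lemma is_derive_bcoef t : is_derive (bcoef K K' w) t (dbcoef K K' w t).
Proof. apply is_derive_coef; [assumption | |]; intros; apply is_derive_fprof; auto. Qed.

Lemma continuous_dacoef t : continuous (dacoef K K' w) t.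
Proof.
  apply continuous_dcoef; [assumption | intros; apply is_derive_gprof; auto
                          | intros; apply is_derive_gprof; auto |].
  intros s. apply (continuous_ext_R (fun s => - ramp 3 0 w s)); [reflexivity|].
  apply (continuous_opp (V := R_NormedModule)), continuous_ramp.
Qed.

Lemma continuous_dbcoef t : continuous (dbcoef K K' w) t.
Proof.
  apply continuous_dcoef; [assumption | intros; apply is_derive_fprof; auto
                          | intros; apply is_derive_fprof; auto |].
  intros s. apply continuous_ramp.
Qed.

Lemma is_derive_Acoef i j (t : R) : is_derive (Acoef K K' w i j) t (dAcoef K K' w i j t).
Proof.
  pose proof (is_derive_acoef t) as Ha. pose proof (is_derive_bcoef t) as Hb.
  destruct i, j; unfold Acoef, dAcoef; [exact Ha | | | exact Hb];
    apply is_derive_scal; assumption.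
Qed.

Lemma continuous_dAcoef i j (t : R) : continuous (dAcoef K K' w i j) t.
Proof.
  pose proof (continuous_dacoef t) as Ha. pose proof (continuous_dbcoef t) as Hb.
  destruct i, j; unfold dAcoef; [exact Ha | | | exact Hb];
    apply (continuous_scal_r (K := R_AbsRing) (V := R_NormedModule)); assumption.
Qed.

Lemma acoef_dacoef_out t : t <= 0 \/ w <= t -> acoef K K' w t = 0 /\ dacoef K K' w t = 0.
Proof. intros Ht. apply coef_dcoef_zero; apply gprof_out; (assumption || lia). Qed.

Lemma bcoef_dbcoef_out t : t <= w \/ 2 * w <= t -> bcoef K K' w t = 0 /\ dbcoef K K' w t = 0.
Proof. intros Ht. apply coef_dcoef_zero; apply fprof_out; (assumption || lia). Qed.

Lemma Acoef_out i j t : t <= 0 \/ 2 * w <= t -> Acoef K K' w i j t = 0.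
Proof.
  intros Ht.
  destruct (acoef_dacoef_out t) as [Ha _]; [destruct Ht; [left | right]; lra|].
  destruct (bcoef_dbcoef_out t) as [Hb _]; [destruct Ht; [left | right]; lra|].
  destruct i, j; simpl; rewrite ?Ha, ?Hb; ring.
Qed.

End AmatProperties.

Lemma Amat_properties (k k' : nat) (w : R) : 0 < w -> (0 < k)%nat -> (0 < k')%nat ->
  (forall i j, is_C1 (Amat (INR k) (INR k') w i j) /\ periodic2 (Amat (INR k) (INR k') w i j)) /\
  (forall i j x y t, (t <= 0 \/ 2 * w <= t) -> Amat (INR k) (INR k') w i j x y t = delta i j).
Proof.
  intros Hw Hk Hk'. apply lt_0_INR in Hk, Hk'. split.
  - intros i j. split.
    + apply is_C1_sep with (dg := dAcoef (INR k) (INR k') w i j)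
        (dp := dtrig i j (INR k)) (dq := dtrig i j (INR k')); intros;
        [apply is_derive_Acoef | apply is_derive_trig | apply is_derive_trig
        | apply continuous_dAcoef | apply continuous_dtrig | apply continuous_dtrig]; assumption.
    + apply periodic2_sep; intros; apply trig_periodic.
  - intros i j x y t Ht. unfold Amat, sep. rewrite Acoef_out by assumption. ring.
Qed.

Section CoefBound.

Variables (a1 a2 a3 : R -> R) (L lam N T s E C0 Rn t : R).
Hypotheses (N_pos : 0 < N) (T_nonneg : 0 <= T) (s_range : 0 <= s <= C0 * N) (L_range : 0 <= L <= Rn * N)
  (a1_bound : Rabs (a1 t) <= T * s) (a2_bound : Rabs (a2 t) <= T * s ^ 2)
  (exp_bound : exp (lam * t) <= E).

Lemma Rabs_sub_2mul_le (u v : R) : Rabs (u - 2 * L * v) <= Rabs u + 2 * L * Rabs v.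
Proof.
  unfold Rminus. eapply Rle_trans; [apply Rabs_triang|].
  rewrite Rabs_Ropp, !Rabs_mult, (Rabs_right 2), (Rabs_right L) by lra. lra.
Qed.

Lemma Rabs_coef_num_le : Rabs (a2 t - 2 * L * a1 t) <= T * (C0 + 2 * Rn) * s * N.
Proof.
  eapply Rle_trans; [apply Rabs_sub_2mul_le|].
  assert (2 * L * Rabs (a1 t) <= 2 * L * (T * s)) by (apply Rmult_le_compat_l; lra).
  assert (T * s * s <= T * s * (C0 * N)) by (apply Rmult_le_compat_l; nra).
  assert (T * s * L <= T * s * (Rn * N)) by (apply Rmult_le_compat_l; nra).
  simpl in a2_bound. nra.
Qed.

Lemma Rabs_coef_le : Rabs (coef a1 a2 L lam N t) <= T * (C0 + 2 * Rn) * E * s / N.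
Proof.
  unfold coef. rewrite Rabs_div_pos, Rabs_mult, (Rabs_right (exp _)) by (nra || (left; apply exp_pos)).
  apply Rmult_le_reg_r with (N * N); [nra|].
  unfold Rdiv. rewrite Rmult_assoc, Rinv_l, Rmult_1_r by nra.
  replace (T * (C0 + 2 * Rn) * E * s * / N * (N * N)) with ((T * (C0 + 2 * Rn) * s * N) * E) by (field; lra).
  apply Rmult_le_compat; [apply Rabs_pos | left; apply exp_pos | apply Rabs_coef_num_le | exact exp_bound].
Qed.

Hypotheses (a3_bound : Rabs (a3 t) <= T * s ^ 3) (lam_bound : Rabs lam <= C0 * s).

Lemma Rabs_dcoef_le : Rabs (dcoef a1 a2 a3 L lam N t) <= T * (1 + C0) * C0 * (C0 + 2 * Rn) * E * s.
Proof.
  assert (H3 : Rabs (a3 t - 2 * L * a2 t) <= T * (C0 + 2 * Rn) * s ^ 2 * N).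
  { eapply Rle_trans; [apply Rabs_sub_2mul_le|].
    assert (2 * L * Rabs (a2 t) <= 2 * L * (T * s ^ 2)) by (apply Rmult_le_compat_l; lra).
    assert (T * s ^ 2 * s <= T * s ^ 2 * (C0 * N)) by (apply Rmult_le_compat_l; nra).
    assert (T * s ^ 2 * L <= T * s ^ 2 * (Rn * N)) by (apply Rmult_le_compat_l; nra).
    simpl in *. nra. }
  pose proof Rabs_coef_num_le as H2.
  assert (HC : 0 <= T * (C0 + 2 * Rn)) by (apply Rmult_le_pos; nra).
  assert (Hsum : Rabs (a3 t - 2 * L * a2 t + lam * (a2 t - 2 * L * a1 t))
                 <= T * (C0 + 2 * Rn) * (1 + C0) * s ^ 2 * N).
  { eapply Rle_trans; [apply Rabs_triang|]. rewrite Rabs_mult.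
    assert (Rabs lam * Rabs (a2 t - 2 * L * a1 t) <= C0 * s * (T * (C0 + 2 * Rn) * s * N))
      by (apply Rmult_le_compat; auto using Rabs_pos).
    simpl in *. nra. }
  unfold dcoef. rewrite Rabs_div_pos, Rabs_mult, (Rabs_right (exp _)) by (nra || (left; apply exp_pos)).
  apply Rmult_le_reg_r with (N * N); [nra|].
  unfold Rdiv. rewrite Rmult_assoc, Rinv_l, Rmult_1_r by nra.
  apply Rle_trans with (T * (C0 + 2 * Rn) * (1 + C0) * s ^ 2 * N * E).
  { apply Rmult_le_compat; [apply Rabs_pos | left; apply exp_pos | exact Hsum | exact exp_bound]. }
  assert (0 <= E) by (pose proof (exp_pos (lam * t)); lra).
  assert (s * s <= s * (C0 * N)) by (apply Rmult_le_compat_l; lra).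
  assert (0 <= T * (C0 + 2 * Rn) * (1 + C0) * E * N) by (repeat apply Rmult_le_pos; nra).
  replace (T * (1 + C0) * C0 * (C0 + 2 * Rn) * E * s * (N * N))
    with (T * (C0 + 2 * Rn) * (1 + C0) * E * N * (s * (C0 * N))) by ring.
  replace (T * (C0 + 2 * Rn) * (1 + C0) * s ^ 2 * N * E)
    with (T * (C0 + 2 * Rn) * (1 + C0) * E * N * (s * s)) by ring.
  apply Rmult_le_compat_l; assumption.
Qed.

End CoefBound.

Lemma Rabs_sep_le (c : R) (g p q dg dp dq : R -> R) (G G' Lam x y t : R) :
  (forall t : R, is_derive g t (dg t)) -> (forall x : R, is_derive p x (dp x)) ->
  (forall y : R, is_derive q y (dq y)) ->
  (forall t, Rabs (g t) <= G) -> (forall t, Rabs (dg t) <= G') ->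
  (forall x, Rabs (p x) <= 1) -> (forall y, Rabs (q y) <= 1) ->
  (forall x, Rabs (dp x) <= Lam) -> (forall y, Rabs (dq y) <= Lam) ->
  Rabs (sep c g p q x y t - c) <= G /\
  (forall d : sdir, Rabs (pd d (sep c g p q) x y t) <= G * Lam) /\
  Rabs (pd Dt (sep c g p q) x y t) <= G'.
Proof.
  intros Hg Hp Hq Bg Bdg Bp Bq Bdp Bdq.
  split; [|split].
  - unfold sep. replace (c + g t * p x * q y - c) with (g t * p x * q y) by ring.
    rewrite <- (Rmult_1_r G), <- (Rmult_1_r (G * 1)). apply Rabs_mul3_le; auto.
  - intros d. rewrite (pd_sep c g p q dg dp dq Hg Hp Hq). destruct d; simpl; unfold sep; rewrite Rplus_0_l.
    + rewrite <- (Rmult_1_r (G * Lam)). apply Rabs_mul3_le; auto.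
    + replace (G * Lam) with (G * 1 * Lam) by ring. apply Rabs_mul3_le; auto.
  - rewrite (pd_sep c g p q dg dp dq Hg Hp Hq). unfold sep. rewrite Rplus_0_l.
    rewrite <- (Rmult_1_r G'), <- (Rmult_1_r (G' * 1)). apply Rabs_mul3_le; auto.
Qed.

Section AmatBounds.

Variables (C0 K K' w : R).
Hypotheses (C0_ge1 : 1 <= C0) (w_pos : 0 < w) (K_pos : 0 < K) (K_le : K <= K')
  (gap_le : K' - K <= C0 / w) (inv_w_le : / w <= C0 * K).

Definition Rk (C0 : R) : R := 1 + C0 ^ 2.

Definition Mcoef (C0 : R) : R := Ktheta * (1 + C0) * C0 * (C0 + 2 * Rk C0) * exp (2 * C0).

Lemma Rk_ge1 : 1 <= Rk C0.
Proof. unfold Rk. pose proof (pow2_ge_0 C0). lra. Qed.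

Lemma Mcoef_nonneg : 0 <= Mcoef C0.
Proof.
  pose proof Ktheta_ge1. pose proof Rk_ge1. pose proof (exp_pos (2 * C0)).
  unfold Mcoef. apply Rmult_le_pos; [|lra]. apply Rmult_le_pos; [|lra].
  apply Rmult_le_pos; [|lra]. apply Rmult_le_pos; lra.
Qed.

Lemma K'_le_Rk : K' <= Rk C0 * K.
Proof.
  unfold Rk. unfold Rdiv in gap_le.
  assert (C0 * / w <= C0 * (C0 * K)) by (apply Rmult_le_compat_l; lra). nra.
Qed.

Lemma inv_w_pos : 0 < / w.
Proof. apply Rinv_0_lt_compat, w_pos. Qed.

Lemma Rabs_prof_le (a : nat -> R -> R) n t :
  Rabs (a n t) <= Ktheta / w ^ n -> Rabs (a n t) <= Ktheta * (/ w) ^ n.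
Proof. intros H. rewrite pow_inv. exact H. Qed.

Lemma exp_gap_le t : 0 <= t <= 2 * w -> exp ((K' - K) * t) <= exp (2 * C0).
Proof.
  intros Ht. apply exp_le_mono.
  replace (2 * C0) with (C0 / w * (2 * w)) by (field; lra). apply Rmult_le_compat; lra.
Qed.

Lemma one_le_exp_2C0 : 1 <= exp (2 * C0).
Proof. rewrite <- exp_0. apply exp_le_mono. lra. Qed.

Lemma Rabs_coef_dcoef_le (a : nat -> R -> R) (L lam N t : R) :
  0 < N -> / w <= C0 * N -> 0 <= L <= Rk C0 * N ->
  (forall n, Rabs (a n t) <= Ktheta / w ^ n) -> exp (lam * t) <= exp (2 * C0) -> Rabs lam <= C0 * / w ->
  Rabs (coef (a 1%nat) (a 2%nat) L lam N t) <= Mcoef C0 * / w / N /\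
  Rabs (dcoef (a 1%nat) (a 2%nat) (a 3%nat) L lam N t) <= Mcoef C0 * / w.
Proof.
  intros HN Hs HL Ha Hexp Hlam.
  pose proof Ktheta_ge1. pose proof inv_w_pos. pose proof Rk_ge1.
  assert (B1 : Rabs (a 1%nat t) <= Ktheta * / w) by (rewrite <- (pow_1 (/ w)); apply Rabs_prof_le, Ha).
  assert (B2 : Rabs (a 2%nat t) <= Ktheta * (/ w) ^ 2) by apply Rabs_prof_le, Ha.
  assert (B3 : Rabs (a 3%nat t) <= Ktheta * (/ w) ^ 3) by apply Rabs_prof_le, Ha.
  split.
  - eapply Rle_trans; [apply Rabs_coef_le with (C0 := C0) (Rn := Rk C0) (E := exp (2 * C0)) (T := Ktheta)
      (s := / w); assumption || lra|].
    unfold Mcoef. unfold Rdiv. apply Rmult_le_compat_r; [left; apply Rinv_0_lt_compat; lra|].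
    assert (0 <= Ktheta * (C0 + 2 * Rk C0) * exp (2 * C0) * / w)
      by (pose proof (exp_pos (2 * C0));
          apply Rmult_le_pos; [apply Rmult_le_pos; [apply Rmult_le_pos|]|]; lra).
    assert (1 <= (1 + C0) * C0) by nra.
    replace (Ktheta * (1 + C0) * C0 * (C0 + 2 * Rk C0) * exp (2 * C0) * / w)
      with (Ktheta * (C0 + 2 * Rk C0) * exp (2 * C0) * / w * ((1 + C0) * C0)) by ring.
    rewrite <- (Rmult_1_r (Ktheta * (C0 + 2 * Rk C0) * exp (2 * C0) * / w)) at 1.
    apply Rmult_le_compat_l; assumption.
  - eapply Rle_trans; [apply Rabs_dcoef_le with (C0 := C0) (Rn := Rk C0) (E := exp (2 * C0)) (T := Ktheta)
      (s := / w); assumption || lra|].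
    unfold Mcoef. lra.
Qed.

Lemma Rabs_acoef_dacoef_le t :
  Rabs (acoef K K' w t) <= Mcoef C0 * / w / K /\ Rabs (dacoef K K' w t) <= Mcoef C0 * / w.
Proof.
  pose proof Mcoef_nonneg. pose proof inv_w_pos. pose proof K'_le_Rk. pose proof one_le_exp_2C0.
  destruct (Rle_dec t 0) as [Ht|Ht]; [|destruct (Rle_dec w t) as [Ht'|Ht']].
  1,2: destruct (acoef_dacoef_out K K' w w_pos t) as [E1 E2]; [lra|];
       rewrite E1, E2, Rabs_R0; split; [apply Rmult_le_pos; [nra | left; apply Rinv_0_lt_compat; lra] | nra].
  apply Rabs_coef_dcoef_le; try lra.
  - intros n. apply Rabs_gprof_le, w_pos.
  - apply Rle_trans with 1; [|assumption]. rewrite <- exp_0. apply exp_le_mono. nra.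
  - rewrite Rabs_left1 by lra. unfold Rdiv in gap_le. lra.
Qed.

Lemma Rabs_bcoef_dbcoef_le t :
  Rabs (bcoef K K' w t) <= Mcoef C0 * / w / K /\ Rabs (dbcoef K K' w t) <= Mcoef C0 * / w.
Proof.
  pose proof Mcoef_nonneg. pose proof inv_w_pos. pose proof K'_le_Rk. pose proof one_le_exp_2C0.
  pose proof Rk_ge1.
  destruct (Rle_dec t w) as [Ht|Ht]; [|destruct (Rle_dec (2 * w) t) as [Ht'|Ht']].
  1,2: destruct (bcoef_dbcoef_out K K' w w_pos t) as [E1 E2]; [lra|];
       rewrite E1, E2, Rabs_R0; split; [apply Rmult_le_pos; [nra | left; apply Rinv_0_lt_compat; lra] | nra].
  destruct (Rabs_coef_dcoef_le (fprof w) K (K' - K) K' t) as [Hc Hd]; try lra.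
  - nra.
  - split; [lra | nra].
  - intros n. apply Rabs_fprof_le, w_pos.
  - apply exp_gap_le. lra.
  - rewrite Rabs_right by lra. unfold Rdiv in gap_le. lra.
  - split; [|exact Hd]. eapply Rle_trans; [exact Hc|]. unfold Rdiv.
    apply Rmult_le_compat_l; [apply Rmult_le_pos; lra|]. apply Rinv_le_contravar; lra.
Qed.

Lemma Rabs_Acoef_dAcoef_le i j t :
  Rabs (Acoef K K' w i j t) <= 2 * Rk C0 * (Mcoef C0 * / w / K) /\
  Rabs (dAcoef K K' w i j t) <= 2 * Rk C0 * (Mcoef C0 * / w).
Proof.
  pose proof Rk_ge1. pose proof K'_le_Rk. pose proof Mcoef_nonneg. pose proof inv_w_pos.
  assert (0 <= Mcoef C0 * / w / K)
    by (unfold Rdiv; apply Rmult_le_pos; [nra | left; apply Rinv_0_lt_compat; lra]).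
  assert (0 <= Mcoef C0 * / w) by nra.
  assert (HKK : Rabs (2 * K' / K) <= 2 * Rk C0).
  { rewrite Rabs_div_pos, Rabs_right by lra. apply Rmult_le_reg_r with K; [lra|].
    unfold Rdiv. rewrite Rmult_assoc, Rinv_l by lra. lra. }
  assert (HK'K : Rabs (2 * K / K') <= 2 * Rk C0).
  { rewrite Rabs_div_pos, Rabs_right by lra. apply Rmult_le_reg_r with K'; [lra|].
    unfold Rdiv. rewrite Rmult_assoc, Rinv_l by lra. nra. }
  destruct (Rabs_acoef_dacoef_le t) as [Ha Hda]. destruct (Rabs_bcoef_dbcoef_le t) as [Hb Hdb].
  destruct i, j; unfold Acoef, dAcoef; rewrite ?Rabs_mult; split;
    first [ apply Rmult_le_compat; try apply Rabs_pos; assumption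
          | apply Rle_trans with (1 * (Mcoef C0 * / w / K)); [lra | apply Rmult_le_compat_r; lra]
          | apply Rle_trans with (1 * (Mcoef C0 * / w)); [lra | apply Rmult_le_compat_r; lra] ].
Qed.

Definition Mb (C0 : R) : R := 2 * Rk C0 ^ 2 * Mcoef C0.

Lemma Mb_nonneg : 0 <= Mb C0.
Proof. pose proof Mcoef_nonneg. pose proof (pow2_ge_0 (Rk C0)). unfold Mb. nra. Qed.

Lemma Amat_bounds :
  (forall i j x y t, Rabs (Amat K K' w i j x y t - delta i j) <= Mb C0 / (w * K)) /\
  (forall (d : sdir) i j x y t, Rabs (pd d (Amat K K' w i j) x y t) <= Mb C0 / w) /\
  (forall i j x y t, Rabs (pd Dt (Amat K K' w i j) x y t) <= Mb C0 / w).
Proof.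
  pose proof Rk_ge1. pose proof K'_le_Rk. pose proof Mcoef_nonneg. pose proof inv_w_pos.
  assert (HS : forall i j x y t,
    Rabs (Amat K K' w i j x y t - delta i j) <= 2 * Rk C0 * (Mcoef C0 * / w / K) /\
    (forall d : sdir,
       Rabs (pd d (Amat K K' w i j) x y t) <= 2 * Rk C0 * (Mcoef C0 * / w / K) * (Rk C0 * K)) /\
    Rabs (pd Dt (Amat K K' w i j) x y t) <= 2 * Rk C0 * (Mcoef C0 * / w)).
  { intros i j x y t.
    apply Rabs_sep_le with (dg := dAcoef K K' w i j) (dp := dtrig i j K) (dq := dtrig i j K').
    - apply is_derive_Acoef; lra.
    - apply is_derive_trig.
    - apply is_derive_trig.
    - intros s. apply Rabs_Acoef_dAcoef_le.
    - intros s. apply Rabs_Acoef_dAcoef_le.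
    - apply Rabs_trig_le.
    - apply Rabs_trig_le.
    - intros s. eapply Rle_trans; [apply Rabs_dtrig_le|]; nra.
    - intros s. eapply Rle_trans; [apply Rabs_dtrig_le|]; lra. }
  assert (HR : 2 * Rk C0 * Mcoef C0 <= Mb C0).
  { unfold Mb. assert (Rk C0 <= Rk C0 ^ 2) by (simpl; nra).
    apply Rmult_le_compat_r; lra. }
  assert (E1 : 2 * Rk C0 * (Mcoef C0 * / w / K) <= Mb C0 / (w * K)).
  { replace (Mb C0 / (w * K)) with (Mb C0 * (/ w / K)) by (field; lra).
    replace (2 * Rk C0 * (Mcoef C0 * / w / K)) with (2 * Rk C0 * Mcoef C0 * (/ w / K)) by (field; lra).
    apply Rmult_le_compat_r; [unfold Rdiv; apply Rmult_le_pos; [lra | left; apply Rinv_0_lt_compat; lra]|].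
    exact HR. }
  assert (E2 : 2 * Rk C0 * (Mcoef C0 * / w / K) * (Rk C0 * K) = Mb C0 / w) by (unfold Mb; field; lra).
  assert (E3 : 2 * Rk C0 * (Mcoef C0 * / w) <= Mb C0 / w).
  { unfold Rdiv. rewrite <- Rmult_assoc. apply Rmult_le_compat_r; lra. }
  split; [|split]; intros.
  - eapply Rle_trans; [apply HS | exact E1].
  - rewrite <- E2. apply HS.
  - eapply Rle_trans; [apply HS | exact E3].
Qed.

End AmatBounds.

(** * Derivatives of [u] *)

Definition tshift (L : R) (a : nat -> R -> R) (n : nat) (t : R) : R := a (S n) t - L * a n t.

Lemma is_derive_tshift (L : R) (a : nat -> R -> R) (n : nat) (t : R) :
  is_derive (a n) t (a (S n) t) -> is_derive (a (S n)) t (a (S (S n)) t) ->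
  is_derive (tshift L a n) t (tshift L a (S n) t).
Proof.
  intros H0 H1. unfold tshift.
  apply (@is_derive_minus R_AbsRing R_NormedModule); [exact H1|].
  apply (is_derive_scal (a n)), H0.
Qed.

Section ModeBounds.

Variables (K K' Lam B : R).
Hypotheses (K_range : 0 <= K <= Lam) (K'_range : 0 <= K' <= Lam) (B_nonneg : 0 <= B).

(* [F] is a two-mode function, [m] derivatives having already been taken, whose profile families
   [a], [p], [b], [q] list successive derivatives as far as the remaining [2 - m] differentiations
   need them, with product bounds that have gained a factor [2 Lam] per derivative taken. *)
Definition tame_mode2 (m : nat) (F : fn3) : Prop :=
  exists a p b q : nat -> R -> R,
    F = mode2 (a 0%nat) (p 0%nat) K (b 0%nat) (q 0%nat) K' /\
    (forall n (t : R), (n + m < 2)%nat -> is_derive (a n) t (a (S n) t) /\ is_derive (b n) t (b (S n) t)) /\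
    (forall n (x : R), (n + m < 2)%nat -> is_derive (p n) x (p (S n) x) /\ is_derive (q n) x (q (S n) x)) /\
    (forall n n' (t x : R), (n + n' + m <= 2)%nat -> 0 <= t ->
       Rabs (a n t) * Rabs (p n' x) <= 2 ^ m * B * Lam ^ (m + n + n') /\
       Rabs (b n t) * Rabs (q n' x) <= 2 ^ m * B * Lam ^ (m + n + n')).

Lemma Rabs_tshift_mul_le (L : R) (a p : nat -> R -> R) n n' m (t x : R) :
  0 <= L <= Lam ->
  Rabs (a (S n) t) * Rabs (p n' x) <= 2 ^ m * B * Lam ^ (m + S n + n') ->
  Rabs (a n t) * Rabs (p n' x) <= 2 ^ m * B * Lam ^ (m + n + n') ->
  Rabs (tshift L a n t) * Rabs (p n' x) <= 2 ^ S m * B * Lam ^ (S m + n + n').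
Proof.
  intros HL H1 H2. unfold tshift.
  replace (S m + n + n')%nat with (S (m + n + n')) by lia.
  replace (m + S n + n')%nat with (S (m + n + n')) in H1 by lia.
  simpl in *. pose proof (Rabs_pos (p n' x)).
  assert (HX : Rabs (a (S n) t - L * a n t) <= Rabs (a (S n) t) + L * Rabs (a n t)).
  { unfold Rminus. eapply Rle_trans; [apply Rabs_triang|].
    rewrite Rabs_Ropp, Rabs_mult, (Rabs_right L) by lra. lra. }
  assert (0 <= 2 ^ m * B * Lam ^ (m + n + n'))
    by (apply Rmult_le_pos; [apply Rmult_le_pos|]; try apply pow_le; lra).
  assert (L * (Rabs (a n t) * Rabs (p n' x)) <= Lam * (2 ^ m * B * Lam ^ (m + n + n'))).
  { apply Rmult_le_compat; try lra. apply Rmult_le_pos; apply Rabs_pos. }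
  apply Rle_trans with ((Rabs (a (S n) t) + L * Rabs (a n t)) * Rabs (p n' x)).
  { apply Rmult_le_compat_r; assumption. }
  nra.
Qed.

Lemma tame_mode2_pd m d F : (m < 2)%nat -> tame_mode2 m F -> tame_mode2 (S m) (pd d F).
Proof.
  intros Hm [a [p [b [q [EF [Hab [Hpq Hbd]]]]]]]. subst F.
  assert (Zd : forall x : R, is_derive (fun _ : R => 0) x 0)
    by (intros; apply (@is_derive_const R_AbsRing R_NormedModule)).
  destruct d.
  - exists a, (fun n => p (S n)), b, (fun _ _ => 0). split; [|split; [|split]].
    + apply pd_x_mode2. intros x. apply Hpq. lia.
    + intros n t Hn. apply Hab. lia.
    + intros n x Hn. split; [apply Hpq; lia | apply Zd].
    + intros n n' t x Hn Ht. destruct (Hbd n (S n') t x ltac:(lia) Ht) as [H1 _]. split.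
      * replace (S m + n + n')%nat with (m + n + S n')%nat by lia. simpl. pose proof (Rabs_pos (a n t)).
        pose proof (Rabs_pos (p (S n') x)). nra.
      * rewrite Rabs_R0, Rmult_0_r. apply Rmult_le_pos; [apply Rmult_le_pos|]; try apply pow_le; lra.
  - exists a, (fun _ _ => 0), b, (fun n => q (S n)). split; [|split; [|split]].
    + apply pd_y_mode2. intros y. apply Hpq. lia.
    + intros n t Hn. apply Hab. lia.
    + intros n x Hn. split; [apply Zd | apply Hpq; lia].
    + intros n n' t x Hn Ht. destruct (Hbd n (S n') t x ltac:(lia) Ht) as [_ H1]. split.
      * rewrite Rabs_R0, Rmult_0_r. apply Rmult_le_pos; [apply Rmult_le_pos|]; try apply pow_le; lra.
      * replace (S m + n + n')%nat with (m + n + S n')%nat by lia. simpl. pose proof (Rabs_pos (b n t)).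
        pose proof (Rabs_pos (q (S n') x)). nra.
  - exists (tshift K a), p, (tshift K' b), q. split; [|split; [|split]].
    + apply pd_t_mode2; intros t; apply Hab; lia.
    + intros n t Hn. split; apply is_derive_tshift; apply Hab; lia.
    + intros n x Hn. apply Hpq. lia.
    + intros n n' t x Hn Ht.
      destruct (Hbd n n' t x ltac:(lia) Ht) as [Ha Hb].
      destruct (Hbd (S n) n' t x ltac:(lia) Ht) as [Ha' Hb'].
      split; apply Rabs_tshift_mul_le; assumption.
Qed.

Lemma tame_mode2_pdl beta F :
  (length beta <= 2)%nat -> tame_mode2 0 F -> tame_mode2 (length beta) (pdl beta F).
Proof.
  induction beta as [|d beta IH]; intros Hl HF; [exact HF|].
  simpl in *. apply tame_mode2_pd; [lia|]. apply IH; [lia | exact HF].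
Qed.

Lemma Rabs_tame_mode2_le m F (x y t : R) : tame_mode2 m F -> (m <= 2)%nat -> 0 <= t ->
  Rabs (F x y t) <= 2 ^ S m * B * Lam ^ m.
Proof.
  intros [a [p [b [q [EF [_ [_ Hbd]]]]]]] Hm Ht. subst F.
  destruct (Hbd 0%nat 0%nat t x ltac:(lia) Ht) as [Ha _].
  destruct (Hbd 0%nat 0%nat t y ltac:(lia) Ht) as [_ Hb].
  rewrite !Nat.add_0_r in *.
  assert (He : forall L, 0 <= L -> 0 < exp (- L * t) <= 1).
  { intros L HL. split; [apply exp_pos|]. rewrite <- exp_0. apply exp_le_mono. nra. }
  destruct (He K ltac:(lra)) as [He1 He1']. destruct (He K' ltac:(lra)) as [He2 He2'].
  unfold mode2. eapply Rle_trans; [apply Rabs_triang|]. rewrite !Rabs_mult, !(Rabs_right (exp _)) by lra.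
  pose proof (Rabs_pos (a 0%nat t)). pose proof (Rabs_pos (p 0%nat x)).
  pose proof (Rabs_pos (b 0%nat t)). pose proof (Rabs_pos (q 0%nat y)).
  assert (Rabs (a 0%nat t) * Rabs (p 0%nat x) * exp (- K * t) <= Rabs (a 0%nat t) * Rabs (p 0%nat x))
    by (rewrite <- (Rmult_1_r (Rabs (a 0%nat t) * Rabs (p 0%nat x))) at 2; apply Rmult_le_compat_l; nra).
  assert (Rabs (b 0%nat t) * Rabs (q 0%nat y) * exp (- K' * t) <= Rabs (b 0%nat t) * Rabs (q 0%nat y))
    by (rewrite <- (Rmult_1_r (Rabs (b 0%nat t) * Rabs (q 0%nat y))) at 2; apply Rmult_le_compat_l; nra).
  simpl. lra.
Qed.

End ModeBounds.

Definition cosfam (L : R) (n : nat) (x : R) : R := L ^ n * cos (L * x + INR n * (PI / 2)).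

Lemma cosfam_0 (L : R) : cosfam L 0 = fun x => cos (L * x).
Proof.
  apply functional_extensionality. intros x. unfold cosfam. simpl. rewrite Rmult_0_l, Rplus_0_r. ring.
Qed.

Lemma is_derive_cosfam (L : R) n (x : R) : is_derive (cosfam L n) x (cosfam L (S n) x).
Proof.
  unfold cosfam. auto_derive; [easy|]. rewrite S_INR.
  replace (L * x + (INR n + 1) * (PI / 2)) with (L * x + INR n * (PI / 2) + PI / 2) by ring.
  rewrite cos_plus, cos_PI2, sin_PI2. simpl. ring.
Qed.

Lemma Rabs_cosfam_le (L : R) n (x : R) : 0 <= L -> Rabs (cosfam L n x) <= L ^ n.
Proof.
  intros HL. unfold cosfam. rewrite Rabs_mult, Rabs_right by (apply Rle_ge, pow_le; lra).
  rewrite <- (Rmult_1_r (L ^ n)) at 2. apply Rmult_le_compat_l; [apply pow_le; lra|].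
  apply Rabs_le, COS_bound.
Qed.

Section SolutionDerivatives.

Variables (C0 : R) (k k' : nat) (w : R).
Hypotheses (C0_ge1 : 1 <= C0) (w_pos : 0 < w) (k_le : INR k <= INR k') (inv_w_le : / w <= C0 * INR k).

Lemma u_fun_tame_mode2 : tame_mode2 (INR k) (INR k') (C0 * INR k') Ktheta 0 (u_fun k k' w).
Proof.
  pose proof (pos_INR k). pose proof (pos_INR k'). pose proof Ktheta_ge1.
  assert (HL : / w <= C0 * INR k') by nra.
  assert (HK : INR k <= C0 * INR k') by nra.
  exists (fprof w), (cosfam (INR k)), (gprof w), (cosfam (INR k')). split; [|split; [|split]].
  - rewrite !cosfam_0. apply u_fun_mode2, w_pos.
  - intros n t Hn. split; [apply is_derive_fprof | apply is_derive_gprof]; (assumption || lia).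
  - intros n x Hn. split; apply is_derive_cosfam.
  - intros n n' t x Hn Ht. rewrite pow_O, Rmult_1_l, Nat.add_0_l, pow_add.
    assert (Hpow : forall (v : R) j, 0 <= v <= C0 * INR k' -> v ^ j <= (C0 * INR k') ^ j)
      by (intros; apply pow_incr; lra).
    assert (Hw : forall j, Ktheta / w ^ j <= Ktheta * (C0 * INR k') ^ j).
    { intros j. unfold Rdiv. rewrite <- pow_inv. apply Rmult_le_compat_l; [lra|].
      apply Hpow. split; [left; apply Rinv_0_lt_compat|]; lra. }
    assert (0 <= (C0 * INR k') ^ n') by (apply pow_le; nra).
    assert (Bf : Rabs (fprof w n t) <= Ktheta * (C0 * INR k') ^ n)
      by (eapply Rle_trans; [apply Rabs_fprof_le, w_pos | apply Hw]).
    assert (Bg : Rabs (gprof w n t) <= Ktheta * (C0 * INR k') ^ n)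
      by (eapply Rle_trans; [apply Rabs_gprof_le, w_pos | apply Hw]).
    assert (Bp : Rabs (cosfam (INR k) n' x) <= (C0 * INR k') ^ n')
      by (eapply Rle_trans; [apply Rabs_cosfam_le; lra | apply Hpow; lra]).
    assert (Bq : Rabs (cosfam (INR k') n' x) <= (C0 * INR k') ^ n')
      by (eapply Rle_trans; [apply Rabs_cosfam_le; lra | apply Hpow; nra]).
    split; rewrite <- Rmult_assoc; apply Rmult_le_compat; try apply Rabs_pos; assumption.
Qed.

Lemma Rabs_pdl_u_fun_le beta (x y t : R) : (length beta <= 2)%nat -> 0 <= t ->
  Rabs (pdl beta (u_fun k k' w) x y t) <= 8 * Ktheta * C0 ^ 2 * INR k' ^ length beta.
Proof.
  intros Hl Ht. pose proof (pos_INR k). pose proof (pos_INR k'). pose proof Ktheta_ge1.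
  assert (HK : 0 <= INR k <= C0 * INR k') by (split; nra).
  assert (HK' : 0 <= INR k' <= C0 * INR k') by (split; nra).
  assert (HB : 0 <= Ktheta) by lra.
  eapply Rle_trans.
  { apply (Rabs_tame_mode2_le _ _ _ Ktheta HK HK'); [|exact Hl | exact Ht].
    apply (tame_mode2_pdl _ _ _ _ HK HK' HB _ _ Hl), u_fun_tame_mode2. }
  rewrite Rpow_mult_distr.
  assert (0 <= INR k' ^ length beta) by (apply pow_le; lra).
  assert (Hc : 2 ^ S (length beta) * C0 ^ length beta <= 8 * C0 ^ 2).
  { destruct beta as [|? [|? [|? ?]]]; simpl in *; try lia; nra. }
  replace (2 ^ S (length beta) * Ktheta * (C0 ^ length beta * INR k' ^ length beta))
    with (Ktheta * INR k' ^ length beta * (2 ^ S (length beta) * C0 ^ length beta)) by ring.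
  replace (8 * Ktheta * C0 ^ 2 * INR k' ^ length beta)
    with (Ktheta * INR k' ^ length beta * (8 * C0 ^ 2)) by ring.
  apply Rmult_le_compat_l; [nra | exact Hc].
Qed.

End SolutionDerivatives.

Lemma u_fun_origin k k' w : 0 < w -> u_fun k k' w 0 0 0 = 1.
Proof.
  intros Hw. unfold u_fun, f_fun, g_fun. destruct (Rle_dec 0 w); [|lra].
  replace (0 / w) with 0 by (field; lra). rewrite theta_le0 by lra.
  rewrite !Rmult_0_r, cos_0, exp_0. ring.
Qed.

Theorem lemma2p1 (C0 : R) (HC0 : 1 <= C0) :
  exists M : R, forall (k k' : nat) (w : R),
    (0 < k)%nat -> (0 < k')%nat -> 0 < w ->
    0 < INR k' - INR k -> INR k' - INR k <= C0 / w -> / w <= C0 * INR k ->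
    exists A : sdir -> sdir -> fn3,
      (* (a) *)
      (forall i j, is_C1 (A i j) /\ periodic2 (A i j)) /\
      (forall i j x y t, (t <= 0 \/ 2 * w <= t) -> A i j x y t = delta i j) /\
      (forall x y t, wave_op A (u_fun k k' w) x y t = 0) /\
      (* (b) *)
      (forall i j x y t, Rabs (A i j x y t - delta i j) <= M / (w * INR k)) /\
      (forall (d : sdir) i j x y t, Rabs (pd d (A i j) x y t) <= M / w) /\
      (forall i j x y t, Rabs (pd Dt (A i j) x y t) <= M / w) /\
      (* (c) : S is any upper bound of |u| on T^2 x [0,2w], in particular the sup *)
      (forall (beta : list dir) (S : R), (length beta <= 2)%nat ->
         (forall x y t, 0 <= t <= 2 * w -> Rabs (u_fun k k' w x y t) <= S) ->
         forall x y t, 0 <= t <= 2 * w ->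
           Rabs (pdl beta (u_fun k k' w) x y t) <= M * INR k' ^ length beta * S).
Proof.
  pose proof (Mb_nonneg C0 HC0) as HMb.
  assert (HMu : 0 <= 8 * Ktheta * C0 ^ 2) by (pose proof Ktheta_ge1; pose proof (pow2_ge_0 C0); nra).
  exists (Mb C0 + 8 * Ktheta * C0 ^ 2).
  intros k k' w Hk Hk' Hw Hgap Hgap_le Hinv.
  pose proof (lt_0_INR _ Hk) as HK. pose proof (lt_0_INR _ Hk') as HK'.
  destruct (Amat_properties k k' w Hw Hk Hk') as [HA HAout].
  destruct (Amat_bounds C0 (INR k) (INR k') w HC0 Hw HK ltac:(lra) Hgap_le Hinv) as [HB1 [HB2 HB3]].
  exists (Amat (INR k) (INR k') w).
  split; [exact HA|]. split; [exact HAout|].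
  split; [intros; rewrite u_fun_mode2 by exact Hw; apply wave_op_Amat; assumption|].
  split; [intros; eapply Rle_trans; [apply HB1 | apply Rdiv_le_compat_r; nra]|].
  split; [intros; eapply Rle_trans; [apply HB2 | apply Rdiv_le_compat_r; lra]|].
  split; [intros; eapply Rle_trans; [apply HB3 | apply Rdiv_le_compat_r; lra]|].
  intros beta S Hl HS x y t Ht.
  assert (HS1 : 1 <= S)
    by (pose proof (HS 0 0 0 ltac:(lra)) as Hu0; rewrite u_fun_origin, Rabs_R1 in Hu0; lra).
  pose proof (pow_le (INR k') (length beta) ltac:(lra)) as Hpow.
  eapply Rle_trans; [apply (Rabs_pdl_u_fun_le C0); (exact Hl || lra)|].
  apply Rle_trans with ((Mb C0 + 8 * Ktheta * C0 ^ 2) * INR k' ^ length beta); [nra|].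
  rewrite <- (Rmult_1_r (_ * _)) at 1. apply Rmult_le_compat_l; nra.
Qed.
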